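(* Let $H$ be $d^4/dx^4$ in $L_2(\mathbb{R}_+)$ with boundary conditions $u''(0)=\alpha u(0)+\alpha_1u'(0)$, $u'''(0)=-\alpha_2u(0)-\bar\alpha u'(0)$ ($\alpha\in\mathbb{C}$, $\alpha_1,\alpha_2\in\mathbb{R}$). Then the total number of negative eigenvalues of $H$ (counted with multiplicity) coincides with the number of negative eigenvalues (counted with multiplicity) of the Hermitian matrix $A=\begin{pmatrix}\alpha_2&\bar\alpha\\ \alpha&\alpha_1\end{pmatrix}$ acting in $\mathbb{C}^2$.
   Context: $H$ acts as $u\mapsto u^{(4)}$ on $u\in\mathsf{H}^4(\mathbb{R}_+)$ satisfying the boundary conditions; it is self-adjoint, with quadratic form $\int_0^\infty|u''|^2dx+\alpha_2|u(0)|^2+2\operatorname{Re}(\alpha u(0)\overline{u'(0)})+\alpha_1|u'(0)|^2$ on $\mathsf{H}^2(\mathbb{R}_+)$. *)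

From Stdlib Require Import Reals List.
From Coquelicot Require Import Coquelicot.
Open Scope R_scope.

Definition lin_comb {X : Type} (cs : list C) (us : list (X -> C)) (x : X) : C :=
  fold_right (fun p acc => Cplus (Cmult (fst p) (snd p x)) acc) (RtoC 0)
             (combine cs us).

(** Linear independence of a finite family of functions, as elements of the
    space of functions on the domain D (functions are identified when they
    agree on D). *)
Definition lin_indep {X : Type} (D : X -> Prop) (us : list (X -> C)) : Prop :=
  forall cs : list C, List.length cs = List.length us ->
    (forall x, D x -> lin_comb cs us x = RtoC 0) ->
    List.Forall (fun c => c = RtoC 0) cs.

Definition subspace_dim {X : Type} (D : X -> Prop) (E : (X -> C) -> Prop)
  (m : nat) : Prop :=
  (exists us, List.length us = m /\ List.Forall E us /\ lin_indep D us) /\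
  (forall us, List.Forall E us -> lin_indep D us -> (List.length us <= m)%nat).

(** Given the eigen-relation [Eig lam v] ("v is in the domain and Tv = lam v")
    of an operator T acting on functions on D, [neg_eig_count D Eig n] says:
    T has finitely many negative eigenvalues and the sum of their
    multiplicities (dimensions of the eigenspaces) equals n. *)
Definition neg_eig_count {X : Type} (D : X -> Prop)
  (Eig : R -> (X -> C) -> Prop) (n : nat) : Prop :=
  exists (l : list R) (ms : list nat),
    NoDup l /\ List.length ms = List.length l /\
    (forall lam, (lam < 0 /\ exists v, Eig lam v /\ exists x, D x /\ v x <> RtoC 0)
                 <-> In lam l) /\
    (forall i, (i < List.length l)%nat -> subspace_dim D (Eig (nth i l 0)) (nth i ms 0%nat)) /\
    fold_right Nat.add 0%nat ms = n.

Definition halfline (x : R) : Prop := 0 <= x.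

Definition sq_int_halfline (f : R -> C) : Prop :=
  ex_RInt_gen (fun x => (Cmod (f x)) ^ 2) (at_point 0) (Rbar_locally p_infty).

(** u is an eigenfunction of H (d^4/dx^4 on L_2(R_+) with the boundary
    conditions u''(0) = al u(0) + al1 u'(0), u'''(0) = -al2 u(0) - conj(al) u'(0))
    with eigenvalue lam: u is in H^4(R_+) (here: u classically C^4 on (0,oo),
    u,...,u''' continuous up to 0, u,...,u'''' square integrable), satisfies the
    boundary conditions, and u'''' = lam u. *)
Definition H_eig (al : C) (al1 al2 : R) (lam : R) (u : R -> C) : Prop :=
  exists u1 u2 u3 u4 : R -> C,
    (forall x, 0 < x ->
       is_derive u x (u1 x) /\ is_derive u1 x (u2 x) /\
       is_derive u2 x (u3 x) /\ is_derive u3 x (u4 x)) /\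
    filterlim u (at_right 0) (locally (u 0)) /\
    filterlim u1 (at_right 0) (locally (u1 0)) /\
    filterlim u2 (at_right 0) (locally (u2 0)) /\
    filterlim u3 (at_right 0) (locally (u3 0)) /\
    sq_int_halfline u /\ sq_int_halfline u1 /\ sq_int_halfline u2 /\
    sq_int_halfline u3 /\ sq_int_halfline u4 /\
    u2 0 = Cplus (Cmult al (u 0)) (Cmult (RtoC al1) (u1 0)) /\
    u3 0 = Copp (Cplus (Cmult (RtoC al2) (u 0)) (Cmult (Cconj al) (u1 0))) /\
    (forall x, 0 < x -> u4 x = Cmult (RtoC lam) (u x)).

(** Vectors of C^2 as functions bool -> C (true = first coordinate).
    Eigen-relation of the Hermitian matrix A = [[al2, conj al],[al, al1]]. *)
Definition A_eig (al : C) (al1 al2 : R) (lam : R) (v : bool -> C) : Prop :=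
  Cplus (Cmult (RtoC al2) (v true)) (Cmult (Cconj al) (v false))
    = Cmult (RtoC lam) (v true) /\
  Cplus (Cmult al (v true)) (Cmult (RtoC al1) (v false))
    = Cmult (RtoC lam) (v false).

Definition allbool (b : bool) : Prop := True.

(* For [lam = - 4 t^4 < 0] the square-integrable solutions of [u'''' = lam u] on the half-line
   are the combinations of [e^{(- t + i t) x}] and [e^{(- t - i t) x}], so an eigenfunction is
   determined by [(u 0, u' 0)], and the boundary conditions say exactly that this vector lies in
   the kernel of the Hermitian matrix [M t = A + [[4 t^3, 2 t^2], [2 t^2, 2 t]]].  Hence the
   multiplicity of [- 4 t^4] is the number of eigenvalues of [M t] that vanish.  Since
   [M t - M s] is positive definite for [0 <= s < t], both eigenvalues of [M t] are strictly
   increasing, continuous and eventually positive, so each of them vanishes at some [t > 0]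
   (and then exactly once) if and only if the corresponding eigenvalue of [A = M 0] is negative. *)

From Stdlib Require Import Reals List.
From Coquelicot Require Import Coquelicot.
From Stdlib Require Import Permutation Lra Lia Psatz Classical ClassicalEpsilon.
Open Scope R_scope.

(** * Complex-valued functions of a real variable *)

(* [ring] for goals whose type is only convertible to [C], e.g. a [NormedModule] carrier. *)
Ltac Cring := match goal with |- ?l = ?r => change (@eq C l r) end; ring.

Lemma C_neq_0 (z : C) : fst z <> 0 \/ snd z <> 0 -> z <> RtoC 0.
Proof. intros [H|H] E; subst; simpl in H; lra. Qed.

Lemma Cmult_integral (a b : C) : (a * b)%C = RtoC 0 -> a = RtoC 0 \/ b = RtoC 0.
Proof.
  intros H. destruct (Ceq_dec a 0) as [Ha|Ha]; [now left|].
  destruct (Ceq_dec b 0) as [Hb|Hb]; [now right|]. now destruct (Cmult_neq_0 a b Ha Hb).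
Qed.

Lemma Cmult_reg_0_l (a b : C) : a <> RtoC 0 -> (a * b)%C = RtoC 0 -> b = RtoC 0.
Proof. intros Ha H. now destruct (Cmult_integral a b H). Qed.

Lemma is_derive_eq {V : NormedModule R_AbsRing} (f g : R -> V) x l l' :
  (forall y, f y = g y) -> l = l' -> is_derive f x l -> is_derive g x l'.
Proof. intros Hfg <- Hf. exact (is_derive_ext f g x l Hfg Hf). Qed.

Lemma is_derive_pair (f g : R -> R) x a b :
  is_derive f x a -> is_derive g x b ->
  is_derive (fun y => (f y, g y) : C) x ((a, b) : C).
Proof.
  intros Hf Hg.
  apply (filterdiff_comp_2 f g (fun a b => (a, b) : R * R)
    (fun y => scal y a) (fun y => scal y b) (fun a b => (a, b))); auto.
  apply filterdiff_linear. split; try reflexivity.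
  exists 1. split; [lra|]. intros [u v]. simpl. lra.
Qed.

Lemma is_derive_fst (f : R -> C) x l :
  is_derive f x l -> is_derive (fun y => fst (f y)) x (fst l).
Proof.
  intros Hf. apply (filterdiff_comp f fst _ fst Hf).
  apply filterdiff_linear. split; try reflexivity.
  exists 1. split; [lra|]. intros [u v]. rewrite Rmult_1_l.
  eapply Rle_trans; [|apply sqrt_plus_sqr]. eapply Rle_trans; [|apply Rmax_l].
  simpl. unfold abs; simpl. rewrite Rabs_Rabsolu. apply Rle_refl.
Qed.

Lemma is_derive_snd (f : R -> C) x l :
  is_derive f x l -> is_derive (fun y => snd (f y)) x (snd l).
Proof.
  intros Hf. apply (filterdiff_comp f snd _ snd Hf).
  apply filterdiff_linear. split; try reflexivity.
  exists 1. split; [lra|]. intros [u v]. rewrite Rmult_1_l.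
  eapply Rle_trans; [|apply sqrt_plus_sqr]. eapply Rle_trans; [|apply Rmax_r].
  simpl. unfold abs; simpl. rewrite Rabs_Rabsolu. apply Rle_refl.
Qed.

Lemma is_derive_C (f : R -> C) x l :
  is_derive (fun y => fst (f y)) x (fst l) ->
  is_derive (fun y => snd (f y)) x (snd l) -> is_derive f x l.
Proof.
  intros H1 H2. destruct l as [a b].
  eapply is_derive_eq; [| |exact (is_derive_pair _ _ x a b H1 H2)]; [|reflexivity].
  intros y. symmetry. apply surjective_pairing.
Qed.

Lemma is_derive_Rmult (f g : R -> R) x a b :
  is_derive f x a -> is_derive g x b -> is_derive (fun y => f y * g y) x (a * g x + f x * b).
Proof. intros Hf Hg. apply (is_derive_mult f g); [exact Hf|exact Hg|intros; apply Rmult_comm]. Qed.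

Lemma is_derive_Cmult (f g : R -> C) x a b :
  is_derive f x a -> is_derive g x b ->
  is_derive (fun y => f y * g y)%C x (a * g x + f x * b)%C.
Proof.
  intros Hf Hg.
  pose proof (is_derive_fst _ _ _ Hf) as F1. pose proof (is_derive_snd _ _ _ Hf) as F2.
  pose proof (is_derive_fst _ _ _ Hg) as G1. pose proof (is_derive_snd _ _ _ Hg) as G2.
  apply is_derive_C.
  - refine (is_derive_eq _ _ x _ _ (fun y => eq_refl) _ (is_derive_minus _ _ x _ _
      (is_derive_Rmult _ _ x _ _ F1 G1) (is_derive_Rmult _ _ x _ _ F2 G2))).
    simpl. unfold minus, plus, opp; simpl. ring.
  - refine (is_derive_eq _ _ x _ _ (fun y => eq_refl) _ (is_derive_plus _ _ x _ _
      (is_derive_Rmult _ _ x _ _ F1 G2) (is_derive_Rmult _ _ x _ _ F2 G1))).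
    simpl. unfold plus; simpl. ring.
Qed.

Lemma is_derive_Cplus (f g : R -> C) x a b :
  is_derive f x a -> is_derive g x b ->
  is_derive (fun y => f y + g y)%C x (a + b)%C.
Proof. exact (is_derive_plus f g x a b). Qed.

Lemma is_derive_Cscal (c : C) (f : R -> C) x a :
  is_derive f x a -> is_derive (fun y => c * f y)%C x (c * a)%C.
Proof.
  intros Hf. eapply is_derive_eq; [| |apply (is_derive_Cmult (fun _ => c) f x (RtoC 0) a);
    [exact (@is_derive_const R_AbsRing _ c x)|exact Hf]]; [intros; reflexivity|Cring].
Qed.

Definition cexp (s : C) (x : R) : C :=
  (exp (fst s * x) * cos (snd s * x), exp (fst s * x) * sin (snd s * x)).

Lemma is_derive_cexp s x : is_derive (cexp s) x (s * cexp s x)%C.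
Proof.
  destruct s as [a b]. unfold cexp. apply is_derive_C; simpl; auto_derive; auto; ring.
Qed.

Lemma cexp_0 s : cexp s 0 = 1%C.
Proof.
  unfold cexp. rewrite !Rmult_0_r, exp_0, cos_0, sin_0.
  apply injective_projections; simpl; ring.
Qed.

Lemma cexp_opp_r s x : (cexp s x * cexp (- s) x)%C = 1%C.
Proof.
  destruct s as [a b]; unfold cexp; simpl.
  replace (- a * x) with (- (a * x)) by ring. replace (- b * x) with (- (b * x)) by ring.
  rewrite cos_neg, sin_neg, exp_Ropp.
  pose proof (exp_pos (a * x)). pose proof (sin2_cos2 (b * x)) as Hs. unfold Rsqr in Hs.
  apply injective_projections; simpl; [|field; lra].
  transitivity (exp (a * x) * / exp (a * x) *
    (sin (b * x) * sin (b * x) + cos (b * x) * cos (b * x))); [ring|].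
  rewrite Hs. field. lra.
Qed.

Lemma Cmod_cexp s x : Cmod (cexp s x) = exp (fst s * x).
Proof.
  unfold Cmod, cexp; cbn [fst snd].
  replace ((exp (fst s * x) * cos (snd s * x)) ^ 2 + (exp (fst s * x) * sin (snd s * x)) ^ 2)
    with (exp (fst s * x) ^ 2 * (sin (snd s * x) ^ 2 + cos (snd s * x) ^ 2)) by ring.
  rewrite <- !Rsqr_pow2, sin2_cos2, Rmult_1_r. apply sqrt_Rsqr. left; apply exp_pos.
Qed.

(** * Square-integrable solutions of [u'''' = - 4 t^4 u] *)

Definition mode_form (w d0 d1 d2 d3 : C) : C := (d3 + w * d2 + w ^ 2 * d1 + w ^ 3 * d0)%C.

Definition deriv_chain (u u1 u2 u3 u4 : R -> C) : Prop :=
  forall x, 0 < x ->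
    is_derive u x (u1 x) /\ is_derive u1 x (u2 x) /\
    is_derive u2 x (u3 x) /\ is_derive u3 x (u4 x).

(* [(d/dx - w) (u''' + w u'' + w^2 u' + w^3 u) = u'''' - w^4 u]. *)
Lemma mode_form_exp (u u1 u2 u3 u4 : R -> C) (lam w : C) :
  deriv_chain u u1 u2 u3 u4 -> (forall x, 0 < x -> u4 x = (lam * u x)%C) -> (w ^ 4)%C = lam ->
  exists c, forall x, 0 < x -> mode_form w (u x) (u1 x) (u2 x) (u3 x) = (c * cexp w x)%C.
Proof.
  intros Hd H4 Hw.
  set (G := fun x => (cexp (- w) x * mode_form w (u x) (u1 x) (u2 x) (u3 x))%C).
  assert (HG : forall x, 0 < x -> is_derive G x (RtoC 0)).
  { intros x Hx. destruct (Hd x Hx) as (D0 & D1 & D2 & D3).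
    eapply is_derive_eq; [intros; reflexivity| |
      apply is_derive_Cmult; [apply is_derive_cexp|unfold mode_form;
        apply is_derive_Cplus; [apply is_derive_Cplus; [apply is_derive_Cplus|]|];
        [exact D3|apply is_derive_Cscal; exact D2|apply is_derive_Cscal; exact D1|
         apply is_derive_Cscal; exact D0]]].
    rewrite (H4 x Hx), <- Hw. unfold mode_form. Cring. }
  exists (G 1). intros x Hx.
  assert (HGx : G x = G 1).
  { destruct (Rtotal_order x 1) as [Hl|[->|Hg]]; [| reflexivity |symmetry];
      apply eq_is_derive; try lra; intros s Hs; apply HG; lra. }
  rewrite <- HGx. unfold G.
  transitivity (cexp w x * cexp (- w) x * mode_form w (u x) (u1 x) (u2 x) (u3 x))%C;
    [rewrite cexp_opp_r|]; ring.
Qed.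

Definition bounded_partial_integrals (g : R -> R) : Prop :=
  exists M b0, forall b, b0 < b -> ex_RInt g 0 b /\ RInt g 0 b <= M.

Lemma sq_int_bounded_partial_integrals (f : R -> C) :
  sq_int_halfline f -> bounded_partial_integrals (fun x => Cmod (f x) ^ 2).
Proof.
  intros [l Hl].
  destruct (Hl (ball l (mkposreal 1 Rlt_0_1)) (locally_ball l (mkposreal 1 Rlt_0_1)))
    as [Q P' HQ [M HM] HP].
  exists (l + 1), M. intros b Hb.
  destruct (HP 0 b HQ (HM b Hb)) as [y [Hy Hball]].
  split; [exists y; exact Hy|].
  change (is_RInt (fun x => Cmod (f x) ^ 2) 0 b y) in Hy.
  rewrite (is_RInt_unique _ _ _ _ Hy).
  change (Rabs (y - l) < 1) in Hball. apply Rabs_lt_between in Hball. lra.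
Qed.

Lemma bounded_partial_integrals_plus (g h : R -> R) :
  bounded_partial_integrals g -> bounded_partial_integrals h ->
  bounded_partial_integrals (fun x => g x + h x).
Proof.
  intros (M & b0 & Hg) (N & b1 & Hh). exists (M + N), (Rmax b0 b1). intros b Hb.
  destruct (Hg b) as [Ig Bg]; [eapply Rle_lt_trans; [apply Rmax_l|exact Hb]|].
  destruct (Hh b) as [Ih Bh]; [eapply Rle_lt_trans; [apply Rmax_r|exact Hb]|].
  split; [apply (ex_RInt_plus g h); assumption|].
  replace (RInt (fun x => g x + h x) 0 b) with (RInt g 0 b + RInt h 0 b);
    [lra|symmetry; exact (RInt_plus g h 0 b Ig Ih)].
Qed.

Lemma bounded_partial_integrals_scal (k : R) (g : R -> R) :
  0 <= k -> bounded_partial_integrals g -> bounded_partial_integrals (fun x => k * g x).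
Proof.
  intros Hk (M & b0 & Hg). exists (k * M), b0. intros b Hb. destruct (Hg b Hb) as [Ig Bg].
  split; [apply (ex_RInt_scal g); exact Ig|].
  replace (RInt (fun x => k * g x) 0 b) with (k * RInt g 0 b);
    [apply Rmult_le_compat_l; assumption|symmetry; exact (RInt_scal g 0 b k Ig)].
Qed.

(* A positive constant has unbounded integrals over [0, b]. *)
Lemma bounded_partial_integrals_lower_bound (g : R -> R) (k : R) :
  bounded_partial_integrals g -> (forall x, 0 < x -> k <= g x) -> k <= 0.
Proof.
  intros (M & b0 & Hg) Hk. apply Rnot_lt_le. intros Hk0.
  set (b := Rmax b0 0 + Rabs M / k + 1).
  assert (Hb0 : b0 < b /\ 0 < b).
  { pose proof (Rmax_l b0 0). pose proof (Rmax_r b0 0).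
    assert (0 <= Rabs M / k) by (apply Rdiv_le_0_compat; [apply Rabs_pos|lra]).
    unfold b; lra. }
  destruct (Hg b (proj1 Hb0)) as [Ig Bg].
  assert (Hle : RInt (fun _ => k) 0 b <= RInt g 0 b).
  { apply RInt_le; [lra|apply ex_RInt_const|exact Ig|].
    intros x Hx. apply Hk. lra. }
  rewrite (RInt_const (V := R_CompleteNormedModule)) in Hle.
  change (scal (b - 0) k) with ((b - 0) * k) in Hle.
  assert (k * b > Rabs M).
  { unfold b. pose proof (Rmax_r b0 0). assert (Rabs M / k * k = Rabs M) by (field; lra).
    pose proof (Rabs_pos M). nra. }
  pose proof (Rle_abs M). lra.
Qed.

Lemma sqr_sum4_le a b c d : (a + b + c + d) ^ 2 <= 4 * (a ^ 2 + b ^ 2 + c ^ 2 + d ^ 2).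
Proof.
  pose proof (pow2_ge_0 (a - b)). pose proof (pow2_ge_0 (a - c)). pose proof (pow2_ge_0 (a - d)).
  pose proof (pow2_ge_0 (b - c)). pose proof (pow2_ge_0 (b - d)). pose proof (pow2_ge_0 (c - d)).
  nra.
Qed.

Lemma Cmod_mode_form_sqr_le w d0 d1 d2 d3 :
  Cmod (mode_form w d0 d1 d2 d3) ^ 2 <=
  4 * (Cmod d3 ^ 2 + Cmod w ^ 2 * Cmod d2 ^ 2 + Cmod w ^ 4 * Cmod d1 ^ 2
       + Cmod w ^ 6 * Cmod d0 ^ 2).
Proof.
  assert (Htri : Cmod (mode_form w d0 d1 d2 d3) <=
    Cmod d3 + Cmod w * Cmod d2 + Cmod w ^ 2 * Cmod d1 + Cmod w ^ 3 * Cmod d0).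
  { unfold mode_form. rewrite <- !Cmod_pow, <- !Cmod_mult.
    eapply Rle_trans; [apply Cmod_triangle|apply Rplus_le_compat_r].
    eapply Rle_trans; [apply Cmod_triangle|apply Rplus_le_compat_r].
    apply Cmod_triangle. }
  eapply Rle_trans; [apply pow_incr; split; [apply Cmod_ge_0|exact Htri]|].
  eapply Rle_trans; [apply sqr_sum4_le|]. right; ring.
Qed.

(* [|c|^2 <= |c e^{w x}|^2] is bounded by a combination of the integrable [|u^(j)|^2]. *)
Lemma growing_mode_vanishes (u u1 u2 u3 : R -> C) (w c : C) :
  0 < fst w ->
  sq_int_halfline u -> sq_int_halfline u1 -> sq_int_halfline u2 -> sq_int_halfline u3 ->
  (forall x, 0 < x -> mode_form w (u x) (u1 x) (u2 x) (u3 x) = (c * cexp w x)%C) -> c = RtoC 0.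
Proof.
  intros Hw S0 S1 S2 S3 Hc.
  set (m := Cmod w).
  assert (Hm : 0 <= m) by apply Cmod_ge_0.
  assert (Hbounded : bounded_partial_integrals (fun x =>
    4 * (Cmod (u3 x) ^ 2 + m ^ 2 * Cmod (u2 x) ^ 2 + m ^ 4 * Cmod (u1 x) ^ 2
         + m ^ 6 * Cmod (u x) ^ 2))).
  { apply bounded_partial_integrals_scal; [lra|].
    assert (Hsq : forall (f : R -> C) n, sq_int_halfline f ->
      bounded_partial_integrals (fun x => m ^ n * Cmod (f x) ^ 2)).
    { intros f n Hf. apply bounded_partial_integrals_scal; [apply pow_le; exact Hm|].
      apply sq_int_bounded_partial_integrals; exact Hf. }
    apply bounded_partial_integrals_plus; [apply bounded_partial_integrals_plus;
      [apply bounded_partial_integrals_plus|]|];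
      [apply sq_int_bounded_partial_integrals; exact S3|apply Hsq; assumption..]. }
  apply Cmod_eq_0, Rle_antisym; [|apply Cmod_ge_0].
  assert (Hsqr : Cmod c ^ 2 <= 0).
  { apply (bounded_partial_integrals_lower_bound _ _ Hbounded). intros x Hx. cbv beta.
    eapply Rle_trans; [|apply Cmod_mode_form_sqr_le].
    rewrite Hc by exact Hx. rewrite Cmod_mult, Cmod_cexp.
    assert (1 <= exp (fst w * x)) by (pose proof (exp_ineq1_le (fst w * x)); nra).
    pose proof (Cmod_ge_0 c).
    apply pow_incr. split; [assumption|nra]. }
  pose proof (Cmod_ge_0 c). nra.
Qed.

Lemma mode_form_opp_vanish p d0 d1 d2 d3 :
  p <> RtoC 0 -> mode_form p d0 d1 d2 d3 = RtoC 0 -> mode_form (- p) d0 d1 d2 d3 = RtoC 0 ->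
  (d3 + p ^ 2 * d1)%C = RtoC 0 /\ (d2 + p ^ 2 * d0)%C = RtoC 0.
Proof.
  intros Hp E1 E2. assert (H2 : RtoC 2 <> RtoC 0) by (apply C_neq_0; simpl; lra). split.
  - apply (Cmult_reg_0_l 2); [exact H2|].
    transitivity (mode_form p d0 d1 d2 d3 + mode_form (- p) d0 d1 d2 d3)%C;
      [unfold mode_form; ring|rewrite E1, E2; ring].
  - apply (Cmult_reg_0_l (2 * p)); [exact (Cmult_neq_0 _ _ H2 Hp)|].
    transitivity (mode_form p d0 d1 d2 d3 - mode_form (- p) d0 d1 d2 d3)%C;
      [unfold mode_form; ring|rewrite E1, E2; ring].
Qed.

Lemma sqr_combination_vanish x y p q :
  (p ^ 2 - q ^ 2)%C <> RtoC 0 -> (x + p ^ 2 * y)%C = RtoC 0 -> (x + q ^ 2 * y)%C = RtoC 0 ->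
  x = RtoC 0 /\ y = RtoC 0.
Proof.
  intros Hpq E1 E2.
  assert (Hy : y = RtoC 0).
  { apply (Cmult_reg_0_l (p ^ 2 - q ^ 2)); [exact Hpq|].
    transitivity ((x + p ^ 2 * y) - (x + q ^ 2 * y))%C; [ring|rewrite E1, E2; ring]. }
  split; [|exact Hy]. rewrite <- E1, Hy. ring.
Qed.

(* A cubic polynomial in [w] vanishing at the four distinct points [± p, ± q] is zero. *)
Lemma mode_forms_vanish p q d0 d1 d2 d3 :
  p <> RtoC 0 -> q <> RtoC 0 -> (p ^ 2 - q ^ 2)%C <> RtoC 0 ->
  mode_form p d0 d1 d2 d3 = RtoC 0 -> mode_form (- p) d0 d1 d2 d3 = RtoC 0 ->
  mode_form q d0 d1 d2 d3 = RtoC 0 -> mode_form (- q) d0 d1 d2 d3 = RtoC 0 ->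
  d0 = RtoC 0 /\ d1 = RtoC 0 /\ d2 = RtoC 0 /\ d3 = RtoC 0.
Proof.
  intros Hp Hq Hpq E1 E2 E3 E4.
  destruct (mode_form_opp_vanish p d0 d1 d2 d3 Hp E1 E2) as [P31 P20].
  destruct (mode_form_opp_vanish q d0 d1 d2 d3 Hq E3 E4) as [Q31 Q20].
  destruct (sqr_combination_vanish d3 d1 p q Hpq P31 Q31) as [-> ->].
  destruct (sqr_combination_vanish d2 d0 p q Hpq P20 Q20) as [-> ->].
  repeat split.
Qed.

(* For [lam = - 4 t^4] the roots of [w^4 = lam] are [± t ± i t]; these two have negative real
   part. *)
Definition wplus (t : R) : C := (- t, t).
Definition wminus (t : R) : C := (- t, - t).

Lemma wplus_pow4 t : (wplus t ^ 4)%C = RtoC (- (4 * t ^ 4)).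
Proof. unfold wplus. apply injective_projections; simpl; ring. Qed.

Lemma wminus_pow4 t : (wminus t ^ 4)%C = RtoC (- (4 * t ^ 4)).
Proof. unfold wminus. apply injective_projections; simpl; ring. Qed.

(* [sol t a b j] is the [j]-th derivative of [a e^{wplus t x} + b e^{wminus t x}]. *)
Definition sol (t : R) (a b : C) (j : nat) (x : R) : C :=
  (a * wplus t ^ j * cexp (wplus t) x + b * wminus t ^ j * cexp (wminus t) x)%C.

Lemma is_derive_sol t a b j x : is_derive (sol t a b j) x (sol t a b (S j) x).
Proof.
  eapply is_derive_eq; [intros; reflexivity| |
    apply is_derive_Cplus; apply is_derive_Cscal; apply is_derive_cexp].
  unfold sol. simpl. Cring.
Qed.

Lemma sol_at_0 t a b j : sol t a b j 0 = (a * wplus t ^ j + b * wminus t ^ j)%C.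
Proof. unfold sol. rewrite !cexp_0. ring. Qed.

Lemma sol_4 t a b x : sol t a b 4 x = (RtoC (- (4 * t ^ 4)) * sol t a b 0 x)%C.
Proof. unfold sol. rewrite wplus_pow4, wminus_pow4. ring. Qed.

Lemma sol_right_cont t a b j : filterlim (sol t a b j) (at_right 0) (locally (sol t a b j 0)).
Proof.
  intros P HP.
  pose proof (@ex_derive_continuous R_AbsRing
    (prod_NormedModule R_AbsRing R_NormedModule R_NormedModule) (sol t a b j) 0
    (ex_intro _ _ (is_derive_sol t a b j 0)) P HP) as Hc.
  unfold filtermap, at_right, within in *. apply (filter_imp (fun y => P (sol t a b j y))); auto.
Qed.

Lemma filterlim_exp_decay (t K : R) (G : R -> R) : 0 < t ->
  (forall x, 0 <= x -> Rabs (G x) <= K * exp (- t * x)) ->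
  filterlim G (Rbar_locally p_infty) (locally 0).
Proof.
  intros Ht HG. apply filterlim_locally. intros eps.
  set (K' := Rabs K + 1).
  assert (HK' : 0 < K') by (unfold K'; pose proof (Rabs_pos K); lra).
  pose proof (cond_pos eps) as Heps.
  exists (Rmax 0 (ln (K' / eps) / t)). intros x Hx.
  pose proof (Rmax_l 0 (ln (K' / eps) / t)). pose proof (Rmax_r 0 (ln (K' / eps) / t)).
  change (Rabs (G x - 0) < eps). rewrite Rminus_0_r.
  eapply Rle_lt_trans; [apply HG; simpl in Hx; lra|].
  assert (He : K' / eps < exp (t * x)).
  { rewrite <- (exp_ln (K' / eps)) by (apply Rdiv_lt_0_compat; assumption).
    apply exp_increasing.
    assert (Hx1 : ln (K' / eps) / t < x) by (simpl in Hx; lra).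
    apply (Rmult_lt_compat_l t) in Hx1; [|exact Ht].
    replace (t * (ln (K' / eps) / t)) with (ln (K' / eps)) in Hx1 by (field; lra). lra. }
  replace (- t * x) with (- (t * x)) by ring. rewrite exp_Ropp.
  pose proof (exp_pos (t * x)). pose proof (Rle_abs K).
  apply (Rmult_lt_reg_r (exp (t * x))); [assumption|].
  rewrite Rmult_assoc, Rinv_l by lra.
  apply (Rmult_lt_compat_r eps) in He; [|assumption].
  unfold Rdiv in He. rewrite Rmult_assoc, Rinv_l in He by lra.
  unfold K' in He. nra.
Qed.

Definition damped_trig (t P0 P1 P2 : R) (x : R) : R :=
  exp (- (2 * t) * x) * (P0 + P1 * cos (2 * t * x) + P2 * sin (2 * t * x)).

Definition damped_trig_prim (t P0 P1 P2 : R) (x : R) : R :=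
  exp (- (2 * t) * x) * (- P0 / (2 * t) + (- (P1 + P2) / (4 * t)) * cos (2 * t * x)
    + ((P1 - P2) / (4 * t)) * sin (2 * t * x)).

Lemma is_derive_damped_trig_prim t P0 P1 P2 x : 0 < t ->
  is_derive (damped_trig_prim t P0 P1 P2) x (damped_trig t P0 P1 P2 x).
Proof. intros Ht. unfold damped_trig_prim, damped_trig. auto_derive; [auto|field; lra]. Qed.

Lemma ex_RInt_gen_damped_trig t P0 P1 P2 : 0 < t ->
  ex_RInt_gen (damped_trig t P0 P1 P2) (at_point 0) (Rbar_locally p_infty).
Proof.
  intros Ht.
  assert (HD : forall x, Derive (damped_trig_prim t P0 P1 P2) x = damped_trig t P0 P1 P2 x)
    by (intros x; apply is_derive_unique, is_derive_damped_trig_prim, Ht).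
  apply (@ex_RInt_gen_ext_eq R_NormedModule (at_point 0) (Rbar_locally p_infty) _ _
    (Derive (damped_trig_prim t P0 P1 P2)) _ HD).
  exists (0 - damped_trig_prim t P0 P1 P2 0).
  apply is_RInt_gen_Derive.
  - apply Filter_prod with (fun _ => True) (fun _ => True); [exact I|exists 0; auto|].
    intros; eexists; apply is_derive_damped_trig_prim, Ht.
  - apply Filter_prod with (fun _ => True) (fun _ => True); [exact I|exists 0; auto|].
    intros x y _ _ z _. apply (continuous_ext (damped_trig t P0 P1 P2)); [intros; now rewrite HD|].
    apply (@ex_derive_continuous R_AbsRing R_NormedModule). unfold damped_trig. auto_derive. auto.
  - intros P HP. apply locally_singleton with (P := P); exact HP.
  - apply (filterlim_exp_decay (2 * t)
      (Rabs (- P0 / (2 * t)) + Rabs (- (P1 + P2) / (4 * t)) + Rabs ((P1 - P2) / (4 * t)))); [lra|].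
    intros x Hx. unfold damped_trig_prim.
    rewrite Rabs_mult, (Rabs_pos_eq (exp _)) by (left; apply exp_pos).
    rewrite Rmult_comm. apply Rmult_le_compat_r; [left; apply exp_pos|].
    eapply Rle_trans; [apply Rabs_triang|].
    eapply Rle_trans; [apply Rplus_le_compat_r, Rabs_triang|].
    rewrite !Rabs_mult.
    pose proof (COS_bound (2 * t * x)). pose proof (SIN_bound (2 * t * x)).
    assert (Rabs (cos (2 * t * x)) <= 1) by (apply Rabs_le; lra).
    assert (Rabs (sin (2 * t * x)) <= 1) by (apply Rabs_le; lra).
    pose proof (Rabs_pos (- (P1 + P2) / (4 * t))). pose proof (Rabs_pos ((P1 - P2) / (4 * t))).
    nra.
Qed.

(* [|a e^{wplus t x} + b e^{wminus t x}|^2] is a damped trigonometric polynomial. *)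
Lemma sq_int_sol t a b j : 0 < t -> sq_int_halfline (sol t a b j).
Proof.
  intros Ht. unfold sq_int_halfline, sol.
  destruct (a * wplus t ^ j)%C as [a1 a2], (b * wminus t ^ j)%C as [b1 b2].
  set (A := a1 + b1). set (B := b2 - a2). set (C0 := a1 - b1). set (D := a2 + b2).
  apply (@ex_RInt_gen_ext_eq R_NormedModule (at_point 0) (Rbar_locally p_infty) _ _
    (damped_trig t ((A^2+B^2+C0^2+D^2)/2) ((A^2+D^2-B^2-C0^2)/2) (A*B+C0*D))).
  2: apply ex_RInt_gen_damped_trig, Ht.
  intros x. unfold damped_trig, Cmod, cexp, wplus, wminus. cbn [fst snd Cplus Cmult].
  rewrite pow2_sqrt by (apply Rplus_le_le_0_compat; apply pow2_ge_0).
  replace (- t * x) with (- (t * x)) by ring. rewrite cos_neg, sin_neg.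
  replace (- (2 * t) * x) with (- (t * x) + - (t * x)) by ring. rewrite exp_plus.
  replace (2 * t * x) with (2 * (t * x)) by ring. rewrite cos_2a, sin_2a.
  pose proof (sin2_cos2 (t * x)) as Hs. unfold Rsqr in Hs.
  set (e := exp (- (t * x))) in *. set (c := cos (t * x)) in *. set (s := sin (t * x)) in *.
  clearbody e c s. apply Rminus_diag_uniq.
  transitivity (e * e * ((A^2+B^2+C0^2+D^2)/2) * (1 - (s * s + c * c))).
  - unfold A, B, C0, D. field.
  - rewrite Hs. ring.
Qed.

Lemma mode_form_sub w d0 d1 d2 d3 e0 e1 e2 e3 :
  mode_form w (d0 - e0) (d1 - e1) (d2 - e2) (d3 - e3) =
  (mode_form w d0 d1 d2 d3 - mode_form w e0 e1 e2 e3)%C.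
Proof. unfold mode_form. ring. Qed.

Lemma mode_form_sol t a b x :
  let m w := mode_form w (sol t a b 0 x) (sol t a b 1 x) (sol t a b 2 x) (sol t a b 3 x) in
  m (wplus t) = (4 * wplus t ^ 3 * a * cexp (wplus t) x)%C /\
  m (wminus t) = (4 * wminus t ^ 3 * b * cexp (wminus t) x)%C /\
  m (- wplus t)%C = RtoC 0 /\ m (- wminus t)%C = RtoC 0.
Proof.
  unfold mode_form, sol, cexp, wplus, wminus.
  repeat split; apply injective_projections; simpl; ring.
Qed.

Lemma wplus_neq_0 t : 0 < t -> wplus t <> RtoC 0.
Proof. intros; apply C_neq_0; simpl; lra. Qed.

Lemma wminus_neq_0 t : 0 < t -> wminus t <> RtoC 0.
Proof. intros; apply C_neq_0; simpl; lra. Qed.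

Lemma wplus_sqr_neq_wminus_sqr t : 0 < t -> (wplus t ^ 2 - wminus t ^ 2)%C <> RtoC 0.
Proof. intros; apply C_neq_0; simpl; right; nra. Qed.

(* Only the decaying modes [e^{wplus t x}, e^{wminus t x}] survive in L2. *)
Lemma decaying_solution t (u u1 u2 u3 u4 : R -> C) : 0 < t ->
  deriv_chain u u1 u2 u3 u4 -> (forall x, 0 < x -> u4 x = (RtoC (- (4 * t ^ 4)) * u x)%C) ->
  sq_int_halfline u -> sq_int_halfline u1 -> sq_int_halfline u2 -> sq_int_halfline u3 ->
  exists a b, forall x, 0 < x ->
    u x = sol t a b 0 x /\ u1 x = sol t a b 1 x /\ u2 x = sol t a b 2 x /\ u3 x = sol t a b 3 x.
Proof.
  intros Ht Hd H4 S0 S1 S2 S3.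
  assert (Hmode : forall w, (w ^ 4)%C = RtoC (- (4 * t ^ 4)) -> exists c, forall x, 0 < x ->
    mode_form w (u x) (u1 x) (u2 x) (u3 x) = (c * cexp w x)%C)
    by (intros w Hw; exact (mode_form_exp u u1 u2 u3 u4 _ w Hd H4 Hw)).
  destruct (Hmode (wplus t) (wplus_pow4 t)) as [cp Hcp].
  destruct (Hmode (wminus t) (wminus_pow4 t)) as [cm Hcm].
  destruct (Hmode (- wplus t)%C) as [cp' Hcp']; [rewrite <- wplus_pow4; ring|].
  destruct (Hmode (- wminus t)%C) as [cm' Hcm']; [rewrite <- wminus_pow4; ring|].
  assert (Zp : cp' = RtoC 0)
    by (apply (growing_mode_vanishes u u1 u2 u3 (- wplus t)); auto; simpl; lra).
  assert (Zm : cm' = RtoC 0)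
    by (apply (growing_mode_vanishes u u1 u2 u3 (- wminus t)); auto; simpl; lra).
  subst cp' cm'.
  set (a := (cp / (4 * wplus t ^ 3))%C). set (b := (cm / (4 * wminus t ^ 3))%C).
  exists a, b. intros x Hx.
  destruct (mode_form_sol t a b x) as (Sp & Sm & Sp' & Sm').
  destruct (mode_forms_vanish (wplus t) (wminus t) (u x - sol t a b 0 x)%C (u1 x - sol t a b 1 x)%C
    (u2 x - sol t a b 2 x)%C (u3 x - sol t a b 3 x)%C (wplus_neq_0 t Ht) (wminus_neq_0 t Ht)
    (wplus_sqr_neq_wminus_sqr t Ht)) as (D0 & D1 & D2 & D3);
    try (rewrite mode_form_sub; cbv zeta in Sp, Sm, Sp', Sm').
  - rewrite Hcp, Sp by exact Hx. unfold a. field. apply wplus_neq_0, Ht.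
  - rewrite Hcp', Sp' by exact Hx. ring.
  - rewrite Hcm, Sm by exact Hx. unfold b. field. apply wminus_neq_0, Ht.
  - rewrite Hcm', Sm' by exact Hx. ring.
  - repeat split; apply Ceq_minus; assumption.
Qed.

(** * Eigenfunctions of [H] *)

Lemma right_limit_eq (f g : R -> C) l :
  (forall x, 0 < x -> f x = g x) ->
  filterlim f (at_right 0) (locally (f 0)) -> filterlim g (at_right 0) (locally l) -> f 0 = l.
Proof.
  intros Heq Hf Hg. apply (filterlim_locally_unique (F := at_right 0) f); [exact Hf|].
  apply (filterlim_ext_loc g f); [|exact Hg].
  exists (mkposreal 1 Rlt_0_1). intros y _ Hy. symmetry; auto.
Qed.

Definition sol_bc (al : C) (al1 al2 t : R) (a b : C) : Prop :=
  sol t a b 2 0 = (al * sol t a b 0 0 + al1 * sol t a b 1 0)%C /\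
  sol t a b 3 0 = (- (al2 * sol t a b 0 0 + Cconj al * sol t a b 1 0))%C.

Lemma H_eig_sol al al1 al2 t u : 0 < t ->
  H_eig al al1 al2 (- (4 * t ^ 4)) u ->
  exists a b, (forall x, halfline x -> u x = sol t a b 0 x) /\ sol_bc al al1 al2 t a b.
Proof.
  intros Ht (u1 & u2 & u3 & u4 & Hd & L0 & L1 & L2 & L3 & S0 & S1 & S2 & S3 & _ & BC2 & BC3 & H4).
  destruct (decaying_solution t u u1 u2 u3 u4 Ht Hd H4 S0 S1 S2 S3) as (a & b & Hab).
  assert (V : forall (v : R -> C) j, (forall x, 0 < x -> v x = sol t a b j x) ->
    filterlim v (at_right 0) (locally (v 0)) -> v 0 = sol t a b j 0)
    by (intros v j Hv Lv; exact (right_limit_eq v _ _ Hv Lv (sol_right_cont t a b j))).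
  assert (V0 := V u 0%nat (fun x Hx => proj1 (Hab x Hx)) L0).
  assert (V1 := V u1 1%nat (fun x Hx => proj1 (proj2 (Hab x Hx))) L1).
  assert (V2 := V u2 2%nat (fun x Hx => proj1 (proj2 (proj2 (Hab x Hx)))) L2).
  assert (V3 := V u3 3%nat (fun x Hx => proj2 (proj2 (proj2 (Hab x Hx)))) L3).
  exists a, b. split; [|split].
  - intros x [Hx|<-]; [apply Hab, Hx|exact V0].
  - now rewrite <- V0, <- V1, <- V2.
  - now rewrite <- V0, <- V1, <- V3.
Qed.

Lemma sol_H_eig al al1 al2 t a b : 0 < t -> sol_bc al al1 al2 t a b ->
  H_eig al al1 al2 (- (4 * t ^ 4)) (sol t a b 0).
Proof.
  intros Ht [BC2 BC3].
  exists (sol t a b 1), (sol t a b 2), (sol t a b 3), (sol t a b 4).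
  repeat split; try apply is_derive_sol; try apply sol_right_cont; try apply sq_int_sol;
    try assumption.
  intros x _. apply sol_4.
Qed.

(** * Eigenspaces described by the kernel of a 2x2 matrix *)

Record mx2 := Mx2 { m11 : C; m12 : C; m21 : C; m22 : C }.

Definition ker2 (M : mx2) (v : C * C) : Prop :=
  (m11 M * fst v + m12 M * snd v)%C = RtoC 0 /\ (m21 M * fst v + m22 M * snd v)%C = RtoC 0.

Definition det2 (M : mx2) : C := (m11 M * m22 M - m12 M * m21 M)%C.

Definition mx2_zero (M : mx2) : Prop :=
  m11 M = RtoC 0 /\ m12 M = RtoC 0 /\ m21 M = RtoC 0 /\ m22 M = RtoC 0.

Definition vdet (v v' : C * C) : C := (fst v * snd v' - snd v * fst v')%C.

Definition vzero : C * C := (RtoC 0, RtoC 0).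

Fixpoint vsum (cs : list C) (vs : list (C * C)) : C * C :=
  match cs, vs with
  | c :: cs', v :: vs' => ((c * fst v + fst (vsum cs' vs'))%C, (c * snd v + snd (vsum cs' vs'))%C)
  | _, _ => vzero
  end.

Definition lin_indep2 (vs : list (C * C)) : Prop :=
  forall cs, length cs = length vs -> vsum cs vs = vzero -> List.Forall (fun c => c = RtoC 0) cs.

Lemma vsum_repeat_0 n vs : vsum (repeat (RtoC 0) n) vs = vzero.
Proof.
  revert vs. induction n as [|n IHn]; intros [|v vs]; simpl; try reflexivity.
  rewrite IHn. unfold vzero. simpl. f_equal; ring.
Qed.

Lemma vdet_0_dependent (v v' : C * C) : vdet v v' = RtoC 0 ->
  exists c c', (c <> RtoC 0 \/ c' <> RtoC 0) /\ vsum (c :: c' :: nil) (v :: v' :: nil) = vzero.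
Proof.
  destruct v as [v0 v1], v' as [w0 w1]; unfold vdet, vsum, vzero; simpl. intros Hd.
  destruct (Ceq_dec v0 0) as [->|H0]; [destruct (Ceq_dec v1 0) as [->|H1]|].
  - exists (RtoC 1), (RtoC 0). split; [left; exact C1_nz|f_equal; ring].
  - exists w1, (- v1)%C. split.
    + right. intros Hc. apply H1. transitivity (- - v1)%C; [ring|rewrite Hc; ring].
    + f_equal; [transitivity (0 * w1 - v1 * w0)%C; [ring|exact Hd]|ring].
  - exists w0, (- v0)%C. split.
    + right. intros Hc. apply H0. transitivity (- - v0)%C; [ring|rewrite Hc; ring].
    + f_equal; [ring|transitivity (- (v0 * w1 - v1 * w0))%C; [ring|rewrite Hd; ring]].
Qed.

Lemma lin_indep2_singleton v : v <> vzero -> lin_indep2 (v :: nil).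
Proof.
  intros Hv [|c [|c' cs]] Hcs Hs; try discriminate. repeat constructor.
  destruct (Ceq_dec c 0) as [Hc|Hc]; [exact Hc|]. exfalso. apply Hv.
  destruct v as [v0 v1]. unfold vsum, vzero in Hs.
  pose proof (f_equal fst Hs) as H0. pose proof (f_equal snd Hs) as H1. cbn [fst snd] in H0, H1.
  unfold vzero. f_equal; apply (Cmult_reg_0_l c);
    [exact Hc|rewrite <- H0; ring|exact Hc|rewrite <- H1; ring].
Qed.

Lemma lin_indep2_basis : lin_indep2 ((RtoC 1, RtoC 0) :: (RtoC 0, RtoC 1) :: nil).
Proof.
  intros [|c [|c' [|c'' cs]]] Hcs Hs; try discriminate.
  unfold vsum, vzero in Hs.
  pose proof (f_equal fst Hs) as H0. pose proof (f_equal snd Hs) as H1. cbn [fst snd] in H0, H1.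
  repeat constructor; [rewrite <- H0|rewrite <- H1]; ring.
Qed.

Lemma lin_indep2_vdet v v' vs : lin_indep2 (v :: v' :: vs) -> vdet v v' <> RtoC 0.
Proof.
  intros Hi Hd. destruct (vdet_0_dependent v v' Hd) as (c & c' & Hnz & Hs).
  specialize (Hi (c :: c' :: repeat (RtoC 0) (length vs))).
  simpl in Hi. rewrite repeat_length, vsum_repeat_0 in Hi.
  assert (H : List.Forall (fun c => c = RtoC 0) (c :: c' :: repeat (RtoC 0) (length vs))).
  { apply Hi; [reflexivity|]. unfold vsum, vzero in Hs |- *. simpl in Hs |- *. exact Hs. }
  inversion H as [|? ? Hc H']; inversion H'; subst. now destruct Hnz.
Qed.

Lemma lin_indep2_length_1 vs : lin_indep2 vs ->
  (forall v v', In v vs -> In v' vs -> vdet v v' = RtoC 0) -> (length vs <= 1)%nat.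
Proof.
  intros Hi Hd. destruct vs as [|v [|v' vs]]; simpl; try lia.
  exfalso. apply (lin_indep2_vdet v v' vs Hi). apply Hd; simpl; auto.
Qed.

(* Three vectors of [C^2] are dependent, with coefficients given by the 2x2 minors. *)
Lemma lin_indep2_length_2 vs : lin_indep2 vs -> (length vs <= 2)%nat.
Proof.
  intros Hi. destruct vs as [|v1 [|v2 [|v3 vs]]]; simpl; try lia. exfalso.
  pose proof (lin_indep2_vdet _ _ _ Hi) as Hd12.
  specialize (Hi (vdet v2 v3 :: (- vdet v1 v3)%C :: vdet v1 v2 :: repeat (RtoC 0) (length vs))).
  simpl in Hi. rewrite repeat_length, vsum_repeat_0 in Hi.
  assert (H : List.Forall (fun c => c = RtoC 0)
    (vdet v2 v3 :: (- vdet v1 v3)%C :: vdet v1 v2 :: repeat (RtoC 0) (length vs)))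
    by (apply Hi; [reflexivity|unfold vdet, vzero; simpl; f_equal; ring]).
  inversion H as [|? ? _ H']. inversion H' as [|? ? _ H'']. inversion H''. contradiction.
Qed.

Lemma ker2_vdet M v v' : ~ mx2_zero M -> ker2 M v -> ker2 M v' -> vdet v v' = RtoC 0.
Proof.
  destruct M as [a b c d], v as [v0 v1], v' as [w0 w1]; unfold mx2_zero, ker2, vdet; simpl.
  intros Hnz [R1 R2] [S1 S2].
  set (e := (v0 * w1 - v1 * w0)%C).
  assert (Ha : (a * e)%C = RtoC 0)
    by (transitivity ((a * v0 + b * v1) * w1 - (a * w0 + b * w1) * v1)%C;
        [unfold e; ring|rewrite R1, S1; ring]).
  assert (Hb : (b * e)%C = RtoC 0)
    by (transitivity ((a * w0 + b * w1) * v0 - (a * v0 + b * v1) * w0)%C;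
        [unfold e; ring|rewrite R1, S1; ring]).
  assert (Hc : (c * e)%C = RtoC 0)
    by (transitivity ((c * v0 + d * v1) * w1 - (c * w0 + d * w1) * v1)%C;
        [unfold e; ring|rewrite R2, S2; ring]).
  assert (Hd : (d * e)%C = RtoC 0)
    by (transitivity ((c * w0 + d * w1) * v0 - (c * v0 + d * v1) * w0)%C;
        [unfold e; ring|rewrite R2, S2; ring]).
  destruct (Cmult_integral _ _ Ha) as [Za|]; [|assumption].
  destruct (Cmult_integral _ _ Hb) as [Zb|]; [|assumption].
  destruct (Cmult_integral _ _ Hc) as [Zc|]; [|assumption].
  destruct (Cmult_integral _ _ Hd) as [Zd|]; [|assumption].
  now destruct Hnz.
Qed.

Lemma ker2_det_neq_0 M v : det2 M <> RtoC 0 -> ker2 M v -> v = vzero.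
Proof.
  destruct M as [a b c d], v as [v0 v1]; unfold det2, ker2, vzero; simpl. intros Hdet [R1 R2].
  f_equal; apply (Cmult_reg_0_l _ _ Hdet).
  - transitivity (d * (a * v0 + b * v1) - b * (c * v0 + d * v1))%C; [ring|rewrite R1, R2; ring].
  - transitivity (a * (c * v0 + d * v1) - c * (a * v0 + b * v1))%C; [ring|rewrite R1, R2; ring].
Qed.

Lemma ker2_nontrivial M : det2 M = RtoC 0 -> exists v, ker2 M v /\ v <> vzero.
Proof.
  destruct M as [a b c d]; unfold det2, ker2, vzero; simpl. intros Hdet.
  destruct (classic (mx2_zero (Mx2 a b c d))) as [(Za & Zb & Zc & Zd)|Hnz].
  { exists (RtoC 1, RtoC 0). simpl in *. subst. split; [split; ring|].
    intros H. exact (C1_nz (f_equal fst H)). }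
  destruct (Ceq_dec a 0) as [Za|Za]; [destruct (Ceq_dec b 0) as [Zb|Zb]|].
  - exists (d, (- c)%C). simpl. subst a b. split; [split; ring|].
    intros H. pose proof (f_equal fst H) as Hd. pose proof (f_equal snd H) as Hc.
    cbn [fst snd] in Hd, Hc. apply Hnz. unfold mx2_zero; simpl. repeat split; auto.
    transitivity (- - c)%C; [ring|rewrite Hc; ring].
  - exists (b, (- a)%C). simpl. split; [split; [ring|transitivity (- (a * d - b * c))%C;
      [ring|rewrite Hdet; ring]]|]. intros H. exact (Zb (f_equal fst H)).
  - exists (b, (- a)%C). simpl. split; [split; [ring|transitivity (- (a * d - b * c))%C;
      [ring|rewrite Hdet; ring]]|]. intros H. pose proof (f_equal snd H) as Ha.
    cbn [snd] in Ha. apply Za.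
    transitivity (- - a)%C; [ring|rewrite Ha; ring].
Qed.

Lemma Forall_exists_Forall2 {A B : Type} (P : A -> B -> Prop) (l : list A) :
  List.Forall (fun a => exists b, P a b) l -> exists l', List.Forall2 P l l'.
Proof.
  induction 1 as [|a l [b Hb] _ [l' IH]]; [exists nil|exists (b :: l')]; constructor; assumption.
Qed.

Section KernelCoordinates.
Variables (X : Type) (D : X -> Prop) (Eg : (X -> C) -> Prop) (g1 g2 : X -> C) (M : mx2).

Definition has_coords (u : X -> C) (v : C * C) : Prop :=
  forall x, D x -> u x = (fst v * g1 x + snd v * g2 x)%C.

Hypothesis g_indep : forall c1 c2,
  (forall x, D x -> (c1 * g1 x + c2 * g2 x)%C = RtoC 0) -> c1 = RtoC 0 /\ c2 = RtoC 0.
Hypothesis eig_coords : forall u, Eg u -> exists v, ker2 M v /\ has_coords u v.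
Hypothesis ker_eig : forall v, ker2 M v -> exists u, Eg u /\ has_coords u v.

Lemma lin_comb_coords us vs : List.Forall2 has_coords us vs ->
  forall cs x, D x -> lin_comb cs us x = (fst (vsum cs vs) * g1 x + snd (vsum cs vs) * g2 x)%C.
Proof.
  induction 1 as [|u v us vs Huv _ IH]; intros [|c cs] x Hx; unfold lin_comb; simpl; try ring.
  fold (lin_comb cs us x). rewrite IH, Huv by exact Hx. ring.
Qed.

Lemma lin_indep_coords us vs : List.Forall2 has_coords us vs -> lin_indep2 vs -> lin_indep D us.
Proof.
  intros Huv Hi cs Hcs Hz.
  apply Hi; [rewrite (Forall2_length Huv) in Hcs; exact Hcs|].
  destruct (g_indep (fst (vsum cs vs)) (snd (vsum cs vs))) as [E1 E2].
  - intros x Hx. rewrite <- (lin_comb_coords us vs Huv cs x Hx). auto.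
  - destruct (vsum cs vs); simpl in *; subst; reflexivity.
Qed.

Lemma eig_family_coords us : List.Forall Eg us -> lin_indep D us ->
  exists vs, List.Forall (ker2 M) vs /\ lin_indep2 vs /\ length us = length vs.
Proof.
  intros HE Hli.
  destruct (Forall_exists_Forall2 (fun u v => ker2 M v /\ has_coords u v) us) as [vs Hvs].
  { eapply Forall_impl; [|exact HE]. exact eig_coords. }
  assert (Hcoords : List.Forall2 has_coords us vs)
    by exact (Forall2_impl _ (fun u v H => proj2 H) Hvs).
  exists vs. split; [|split; [|exact (Forall2_length Hvs)]].
  - clear -Hvs. induction Hvs; constructor; tauto.
  - intros cs Hcs Hsum. apply Hli; [rewrite (Forall2_length Hvs); exact Hcs|].
    intros x Hx. rewrite (lin_comb_coords us vs Hcoords cs x Hx), Hsum. simpl. ring.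
Qed.

Lemma eigenspace_dim_1 : det2 M = RtoC 0 -> ~ mx2_zero M -> subspace_dim D Eg 1.
Proof.
  intros Hdet Hnz. split.
  - destruct (ker2_nontrivial M Hdet) as (v & Hv & Hv0). destruct (ker_eig v Hv) as (u & Hu & Hc).
    exists (u :: nil). split; [reflexivity|split; [constructor; auto|]].
    apply (lin_indep_coords _ (v :: nil)); [constructor; auto|apply lin_indep2_singleton, Hv0].
  - intros us HE Hli. destruct (eig_family_coords us HE Hli) as (vs & HM & Hi & ->).
    apply lin_indep2_length_1; [exact Hi|]. rewrite Forall_forall in HM.
    intros v v' Hv Hv'. apply (ker2_vdet M); auto.
Qed.

Lemma eigenspace_dim_2 : mx2_zero M -> subspace_dim D Eg 2.
Proof.
  intros (Za & Zb & Zc & Zd). split.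
  - destruct (ker_eig (RtoC 1, RtoC 0)) as (u1 & Hu1 & Hc1);
      [unfold ker2; simpl; rewrite Za, Zb, Zc, Zd; split; ring|].
    destruct (ker_eig (RtoC 0, RtoC 1)) as (u2 & Hu2 & Hc2);
      [unfold ker2; simpl; rewrite Za, Zb, Zc, Zd; split; ring|].
    exists (u1 :: u2 :: nil). split; [reflexivity|split; [repeat constructor; auto|]].
    apply (lin_indep_coords _ _ (Forall2_cons _ _ Hc1 (Forall2_cons _ _ Hc2 (Forall2_nil _))));
    exact lin_indep2_basis.
  - intros us HE Hli. destruct (eig_family_coords us HE Hli) as (vs & _ & Hi & ->).
    apply lin_indep2_length_2, Hi.
Qed.

Lemma eigenvector_exists_iff :
  (exists u, Eg u /\ exists x, D x /\ u x <> RtoC 0) <-> det2 M = RtoC 0.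
Proof.
  split.
  - intros (u & Hu & x & Hx & Hux). apply NNPP. intros Hdet.
    destruct (eig_coords u Hu) as (v & Hv & Hc).
    apply Hux. rewrite Hc, (ker2_det_neq_0 M v Hdet Hv) by exact Hx. simpl. ring.
  - intros Hdet. destruct (ker2_nontrivial M Hdet) as (v & Hv & Hv0).
    destruct (ker_eig v Hv) as (u & Hu & Hc). exists u. split; [exact Hu|].
    apply NNPP. intros Hn. apply Hv0.
    destruct (g_indep (fst v) (snd v)) as [E1 E2].
    + intros x Hx. rewrite <- Hc by exact Hx. apply NNPP. intros Hne. apply Hn. eauto.
    + destruct v; simpl in *; subst; reflexivity.
Qed.

End KernelCoordinates.

(** * Eigenvalues of the boundary matrix *)

(* [eig_lo x y n <= eig_hi x y n] are the eigenvalues of a Hermitian 2x2 matrix with diagonal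
   [x, y] and off-diagonal entries of squared modulus [n]. *)
Definition eig_lo (x y n : R) : R := (x + y - sqrt ((x - y) ^ 2 + 4 * n)) / 2.
Definition eig_hi (x y n : R) : R := (x + y + sqrt ((x - y) ^ 2 + 4 * n)) / 2.

Lemma disc_sqrt_spec x y n : 0 <= n ->
  let S := sqrt ((x - y) ^ 2 + 4 * n) in 0 <= S /\ S ^ 2 = (x - y) ^ 2 + 4 * n /\ - S <= x - y <= S.
Proof.
  intros Hn S. assert (H0 : 0 <= (x - y) ^ 2 + 4 * n) by (pose proof (pow2_ge_0 (x - y)); lra).
  split; [apply sqrt_pos|split].
  - unfold S. apply pow2_sqrt. auto.
  - assert (Ha : Rabs (x - y) <= S).
    { unfold S. rewrite <- sqrt_Rsqr_abs. apply sqrt_le_1_alt. unfold Rsqr. nra. }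
    pose proof (Rle_abs (x - y)). pose proof (Rle_abs (- (x - y))). rewrite Rabs_Ropp in *. lra.
Qed.

Lemma eig_lo_spec x y n : 0 <= n ->
  eig_lo x y n <= x /\ eig_lo x y n <= y /\ (x - eig_lo x y n) * (y - eig_lo x y n) = n.
Proof.
  intros Hn. destruct (disc_sqrt_spec x y n Hn) as (H0 & H1 & H2). unfold eig_lo.
  set (S := sqrt ((x - y) ^ 2 + 4 * n)) in *.
  split; [lra|split; [lra|]]. nra.
Qed.

Lemma eig_hi_spec x y n : 0 <= n ->
  x <= eig_hi x y n /\ y <= eig_hi x y n /\ (eig_hi x y n - x) * (eig_hi x y n - y) = n.
Proof.
  intros Hn. destruct (disc_sqrt_spec x y n Hn) as (H0 & H1 & H2). unfold eig_hi.
  set (S := sqrt ((x - y) ^ 2 + 4 * n)) in *.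
  split; [lra|split; [lra|]]. nra.
Qed.

Lemma eig_lo_le_hi x y n : eig_lo x y n <= eig_hi x y n.
Proof. unfold eig_lo, eig_hi. pose proof (sqrt_pos ((x - y) ^ 2 + 4 * n)). lra. Qed.

Lemma eig_lo_mult_hi x y n : 0 <= n -> eig_lo x y n * eig_hi x y n = x * y - n.
Proof.
  intros Hn. destruct (disc_sqrt_spec x y n Hn) as (H0 & H1 & H2). unfold eig_lo, eig_hi.
  set (S := sqrt ((x - y) ^ 2 + 4 * n)) in *. nra.
Qed.

Lemma lt_eig_lo x y n c : 0 <= n -> c < x -> n < (x - c) * (y - c) -> c < eig_lo x y n.
Proof.
  intros Hn Hx Hp. destruct (disc_sqrt_spec x y n Hn) as (H0 & H1 & H2). unfold eig_lo.
  set (S := sqrt ((x - y) ^ 2 + 4 * n)) in *.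
  assert (Hy : c < y) by nra.
  assert (S < x + y - 2 * c).
  { apply Rnot_le_lt. intro Hle. nra. }
  lra.
Qed.

Lemma eig_hi_lt x y n c : 0 <= n -> x < c -> n < (x - c) * (y - c) -> eig_hi x y n < c.
Proof.
  intros Hn Hx Hp. destruct (disc_sqrt_spec x y n Hn) as (H0 & H1 & H2). unfold eig_hi.
  set (S := sqrt ((x - y) ^ 2 + 4 * n)) in *.
  assert (Hy : y < c) by nra.
  assert (S < 2 * c - x - y).
  { apply Rnot_le_lt. intro Hle. nra. }
  lra.
Qed.

Lemma eig_lo_hi_eq_0 x y n :
  0 <= n -> eig_lo x y n = 0 -> eig_hi x y n = 0 -> x = 0 /\ y = 0 /\ n = 0.
Proof.
  intros Hn H1 H2. destruct (eig_lo_spec x y n Hn) as (A1 & A2 & A3).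
  destruct (eig_hi_spec x y n Hn) as (B1 & B2 & B3). rewrite H1 in *. rewrite H2 in *.
  assert (x = 0) by lra. assert (y = 0) by lra. subst. split; auto. split; auto. lra.
Qed.

(* The sum of a singular positive semidefinite [[x1, z], [z^*, y1]] and a positive definite
   [[dx, dz], [dz, dy]] has positive determinant. *)
Lemma psd_add_pd x1 y1 zr zi dx dy dz :
  0 <= x1 -> 0 <= y1 -> x1 * y1 = zr ^ 2 + zi ^ 2 -> 0 < dx -> 0 < dy -> dz ^ 2 < dx * dy ->
  (zr + dz) ^ 2 + zi ^ 2 < (x1 + dx) * (y1 + dy).
Proof.
  intros Hx Hy Hn Hdx Hdy Hd.
  assert (H1 : 2 * zr * dz <= x1 * dy + y1 * dx).
  { assert (Hsq : (2 * zr * dz) ^ 2 <= (x1 * dy + y1 * dx) ^ 2).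
    { assert (zr ^ 2 <= x1 * y1) by nra.
      assert ((x1 * dy + y1 * dx) ^ 2 - 4 * (x1 * y1) * (dx * dy) = (x1 * dy - y1 * dx) ^ 2) by ring.
      assert (0 <= (x1 * dy - y1 * dx) ^ 2) by apply pow2_ge_0.
      assert (4 * zr ^ 2 * dz ^ 2 <= 4 * (x1 * y1) * (dx * dy)).
      { assert (0 <= zr ^ 2) by apply pow2_ge_0. assert (0 <= dz ^ 2) by apply pow2_ge_0.
        assert (0 <= x1 * y1) by nra. nra. }
      nra. }
    assert (0 <= x1 * dy + y1 * dx) by nra.
    destruct (Rle_or_lt (2 * zr * dz) 0). lra.
    apply Rsqr_incr_0_var; unfold Rsqr; nra. }
  nra.
Qed.

Definition herm2 (x y : R) (z : C) : mx2 := Mx2 (RtoC x) (Cconj z) z (RtoC y).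

Lemma det2_herm2 x y z : det2 (herm2 x y z) = RtoC (x * y - (fst z ^ 2 + snd z ^ 2)).
Proof. destruct z. unfold det2, herm2. apply injective_projections; simpl; ring. Qed.

Lemma herm2_det_eq_0_iff x y z :
  det2 (herm2 x y z) = RtoC 0 <->
  eig_lo x y (fst z ^ 2 + snd z ^ 2) = 0 \/ eig_hi x y (fst z ^ 2 + snd z ^ 2) = 0.
Proof.
  assert (Hn : 0 <= fst z ^ 2 + snd z ^ 2)
    by (pose proof (pow2_ge_0 (fst z)); pose proof (pow2_ge_0 (snd z)); lra).
  rewrite det2_herm2, <- eig_lo_mult_hi by exact Hn. split.
  - intros H. apply Rmult_integral. exact (f_equal fst H).
  - intros [H|H]; rewrite H; f_equal; ring.
Qed.

Lemma herm2_zero_iff x y z :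
  mx2_zero (herm2 x y z) <->
  eig_lo x y (fst z ^ 2 + snd z ^ 2) = 0 /\ eig_hi x y (fst z ^ 2 + snd z ^ 2) = 0.
Proof.
  assert (Hn : 0 <= fst z ^ 2 + snd z ^ 2)
    by (pose proof (pow2_ge_0 (fst z)); pose proof (pow2_ge_0 (snd z)); lra).
  unfold mx2_zero, herm2; cbn [m11 m12 m21 m22]. split.
  - intros (Hx & _ & -> & Hy). apply (f_equal fst) in Hx, Hy. simpl in Hx, Hy. subst x y.
    replace (fst (RtoC 0) ^ 2 + snd (RtoC 0) ^ 2) with 0 by (simpl; ring).
    unfold eig_lo, eig_hi. replace ((0 - 0) ^ 2 + 4 * 0) with 0 by ring. rewrite sqrt_0. lra.
  - intros [Hlo Hhi]. destruct (eig_lo_hi_eq_0 x y _ Hn Hlo Hhi) as (-> & -> & Hz).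
    destruct z as [z1 z2]. simpl in Hz.
    assert (z1 = 0 /\ z2 = 0) as [-> ->]
      by (pose proof (pow2_ge_0 z1); pose proof (pow2_ge_0 z2);
          split; apply Rsqr_0_uniq; unfold Rsqr; nra).
    unfold Cconj. repeat split; apply injective_projections; simpl; ring.
Qed.

Section Family.
Variables (al : C) (al1 al2 : R).

(* The boundary matrix [M t = A + [[4 t^3, 2 t^2], [2 t^2, 2 t]]], whose kernel describes the
   eigenfunctions of H with eigenvalue [- 4 t^4]. *)
Definition diag_x (t : R) : R := al2 + 4 * t ^ 3.
Definition diag_y (t : R) : R := al1 + 2 * t.
Definition offdiag_sq (t : R) : R := (fst al + 2 * t ^ 2) ^ 2 + snd al ^ 2.
Definition lam_lo (t : R) : R := eig_lo (diag_x t) (diag_y t) (offdiag_sq t).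
Definition lam_hi (t : R) : R := eig_hi (diag_x t) (diag_y t) (offdiag_sq t).

Lemma offdiag_sq_nonneg t : 0 <= offdiag_sq t.
Proof.
  unfold offdiag_sq. pose proof (pow2_ge_0 (fst al + 2 * t ^ 2)). pose proof (pow2_ge_0 (snd al)).
  lra.
Qed.

(* [M t - M s] is positive definite for [0 <= s < t]. *)
Lemma increment_det_pos s t : 0 <= s < t ->
  (2 * (t ^ 2 - s ^ 2)) ^ 2 < (4 * (t ^ 3 - s ^ 3)) * (2 * (t - s)).
Proof.
  intros Hst.
  replace ((4 * (t ^ 3 - s ^ 3)) * (2 * (t - s))) with
    ((2 * (t ^ 2 - s ^ 2)) ^ 2 + 4 * (t - s) ^ 2 * (t ^ 2 + s ^ 2)) by ring.
  assert (0 < (t - s) ^ 2) by (apply pow_lt; lra).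
  assert (0 < t ^ 2 + s ^ 2) by nra.
  assert (0 < 4 * (t - s) ^ 2 * (t ^ 2 + s ^ 2)) by (apply Rmult_lt_0_compat; lra).
  lra.
Qed.

Lemma cube_lt s t : 0 <= s < t -> s ^ 3 < t ^ 3.
Proof.
  intros Hst. replace (t ^ 3) with (s ^ 3 + (t - s) * (t ^ 2 + t * s + s ^ 2)) by ring.
  assert (0 < (t - s) * (t ^ 2 + t * s + s ^ 2)) by (apply Rmult_lt_0_compat; nra). lra.
Qed.

(* With [c = lam_lo s], [M s - c] is singular positive semidefinite, so [M t - c] has positive
   determinant and positive diagonal, i.e. [c] lies below both eigenvalues of [M t]. *)
Lemma lam_lo_increasing s t : 0 <= s < t -> lam_lo s < lam_lo t.
Proof.
  intros Hst. unfold lam_lo. set (c := eig_lo (diag_x s) (diag_y s) (offdiag_sq s)).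
  destruct (eig_lo_spec (diag_x s) (diag_y s) (offdiag_sq s) (offdiag_sq_nonneg s))
    as (A1 & A2 & A3).
  fold c in A1, A2, A3. pose proof (cube_lt s t Hst) as Hcube. unfold offdiag_sq in A3.
  apply lt_eig_lo; [apply offdiag_sq_nonneg|unfold diag_x in *; lra|].
  assert (Hdx : 0 < 4 * (t ^ 3 - s ^ 3)) by lra. assert (Hdy : 0 < 2 * (t - s)) by lra.
  assert (Hx : 0 <= diag_x s - c) by lra. assert (Hy : 0 <= diag_y s - c) by lra.
  pose proof (psd_add_pd _ _ _ _ _ _ _ Hx Hy A3 Hdx Hdy (increment_det_pos s t Hst)) as H.
  unfold offdiag_sq, diag_x, diag_y in *.
  replace (fst al + 2 * s ^ 2 + 2 * (t ^ 2 - s ^ 2)) with (fst al + 2 * t ^ 2) in H by ring.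
  replace (al2 + 4 * s ^ 3 - c + 4 * (t ^ 3 - s ^ 3)) with (al2 + 4 * t ^ 3 - c) in H by ring.
  replace (al1 + 2 * s - c + 2 * (t - s)) with (al1 + 2 * t - c) in H by ring.
  exact H.
Qed.

(* Symmetrically, with [c = lam_hi t], [c - M t] is singular positive semidefinite. *)
Lemma lam_hi_increasing s t : 0 <= s < t -> lam_hi s < lam_hi t.
Proof.
  intros Hst. unfold lam_hi. set (c := eig_hi (diag_x t) (diag_y t) (offdiag_sq t)).
  destruct (eig_hi_spec (diag_x t) (diag_y t) (offdiag_sq t) (offdiag_sq_nonneg t))
    as (A1 & A2 & A3).
  fold c in A1, A2, A3. pose proof (cube_lt s t Hst) as Hcube. unfold offdiag_sq in A3.
  apply eig_hi_lt; [apply offdiag_sq_nonneg|unfold diag_x in *; lra|].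
  assert (Hdx : 0 < 4 * (t ^ 3 - s ^ 3)) by lra. assert (Hdy : 0 < 2 * (t - s)) by lra.
  assert (Hx : 0 <= c - diag_x t) by lra. assert (Hy : 0 <= c - diag_y t) by lra.
  assert (Hdz : (- (2 * (t ^ 2 - s ^ 2))) ^ 2 < 4 * (t ^ 3 - s ^ 3) * (2 * (t - s)))
    by (pose proof (increment_det_pos s t Hst); nra).
  assert (Hn : (c - diag_x t) * (c - diag_y t) = (fst al + 2 * t ^ 2) ^ 2 + snd al ^ 2) by lra.
  pose proof (psd_add_pd _ _ _ _ _ _ _ Hx Hy Hn Hdx Hdy Hdz) as H.
  unfold diag_x, diag_y in *.
  replace (fst al + 2 * t ^ 2 + - (2 * (t ^ 2 - s ^ 2))) with (fst al + 2 * s ^ 2) in H by ring.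
  replace ((c - (al2 + 4 * t ^ 3) + 4 * (t ^ 3 - s ^ 3)) * (c - (al1 + 2 * t) + 2 * (t - s)))
    with ((al2 + 4 * s ^ 3 - c) * (al1 + 2 * s - c)) in H by ring.
  exact H.
Qed.

Lemma disc_sqrt_continuous :
  continuity (fun t => sqrt ((diag_x t - diag_y t) ^ 2 + 4 * offdiag_sq t)).
Proof.
  intros x. apply (continuity_pt_comp (fun t => (diag_x t - diag_y t) ^ 2 + 4 * offdiag_sq t));
    [unfold diag_x, diag_y, offdiag_sq; reg|].
  apply continuity_pt_sqrt. pose proof (pow2_ge_0 (diag_x x - diag_y x)).
  pose proof (offdiag_sq_nonneg x). lra.
Qed.

Lemma lam_lo_continuous : continuity lam_lo.
Proof.
  intros x. unfold lam_lo, eig_lo.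
  apply continuity_pt_div; [|apply continuity_pt_const; now intros|lra].
  apply continuity_pt_minus; [unfold diag_x, diag_y; reg|apply disc_sqrt_continuous].
Qed.

Lemma lam_hi_continuous : continuity lam_hi.
Proof.
  intros x. unfold lam_hi, eig_hi.
  apply continuity_pt_div; [|apply continuity_pt_const; now intros|lra].
  apply continuity_pt_plus; [unfold diag_x, diag_y; reg|apply disc_sqrt_continuous].
Qed.

(* For [T = 4 (1 + |al1| + |al2| + |Re al| + |Im al|)] the term [4 T^4] dominates [det (M T)]. *)
Lemma lam_lo_eventually_pos : exists T, 0 < T /\ 0 < lam_lo T.
Proof.
  set (K := 1 + Rabs al1 + Rabs al2 + Rabs (fst al) + Rabs (snd al)).
  pose proof (Rabs_pos al1). pose proof (Rabs_pos al2).
  pose proof (Rabs_pos (fst al)). pose proof (Rabs_pos (snd al)).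
  assert (Hb : forall z, Rabs z <= K - 1 -> - K <= z <= K)
    by (intros z Hz; apply Rabs_le_between; lra).
  destruct (Hb al1) as [B1 B1']; [unfold K; lra|]. destruct (Hb al2) as [B2 B2']; [unfold K; lra|].
  destruct (Hb (fst al)) as [B3 B3']; [unfold K; lra|].
  destruct (Hb (snd al)) as [B4 B4']; [unfold K; lra|].
  assert (HK : 1 <= K) by (unfold K; lra).
  clearbody K. set (T := 4 * K). exists T. split; [unfold T; lra|].
  assert (T2 : 16 <= T ^ 2) by (unfold T; nra).
  assert (T3 : 4 * T ^ 2 <= T ^ 3) by (simpl; unfold T in *; nra).
  assert (KT : K * K <= T ^ 2) by (unfold T; nra).
  apply lt_eig_lo; [apply offdiag_sq_nonneg|unfold diag_x; unfold T in *; nra|].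
  unfold offdiag_sq, diag_x, diag_y.
  assert (C1 : - (T ^ 4) <= 4 * al1 * T ^ 3)
    by (replace (T ^ 4) with (T * T ^ 3) by ring; unfold T at 1; nra).
  assert (C2 : - (T ^ 3) <= - 4 * fst al * T ^ 2)
    by (replace (T ^ 3) with (T * T ^ 2) by ring; unfold T at 1; nra).
  assert (C3 : - (T ^ 2) <= 2 * al2 * T) by (replace (T ^ 2) with (T * T) by ring; unfold T at 1; nra).
  assert (C4 : - (T ^ 2) <= al1 * al2) by nra.
  assert (C5 : fst al ^ 2 <= T ^ 2) by nra.
  assert (C6 : snd al ^ 2 <= T ^ 2) by nra.
  assert (E : (al2 + 4 * T ^ 3 - 0) * (al1 + 2 * T - 0) - ((fst al + 2 * T ^ 2) ^ 2 + snd al ^ 2)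
    = 4 * T ^ 4 + 4 * al1 * T ^ 3 - 4 * fst al * T ^ 2 + 2 * al2 * T + al1 * al2
      - fst al ^ 2 - snd al ^ 2) by ring.
  assert (T4 : 4 * T ^ 3 <= T ^ 4) by (simpl; unfold T in *; nra).
  lra.
Qed.

Lemma lam_hi_eventually_pos : exists T, 0 < T /\ 0 < lam_hi T.
Proof.
  destruct lam_lo_eventually_pos as (T & HT & Hlo). exists T. split; [exact HT|].
  pose proof (eig_lo_le_hi (diag_x T) (diag_y T) (offdiag_sq T)). unfold lam_lo, lam_hi in *. lra.
Qed.

Definition Hmat (t : R) : mx2 := herm2 (diag_x t) (diag_y t) (al + RtoC (2 * t ^ 2))%C.

Lemma offdiag_sq_Hmat t :
  offdiag_sq t = fst (al + RtoC (2 * t ^ 2))%C ^ 2 + snd (al + RtoC (2 * t ^ 2))%C ^ 2.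
Proof. unfold offdiag_sq. simpl. ring. Qed.

Lemma Hmat_det_eq_0_iff t : det2 (Hmat t) = RtoC 0 <-> lam_lo t = 0 \/ lam_hi t = 0.
Proof. unfold lam_lo, lam_hi. rewrite offdiag_sq_Hmat. apply herm2_det_eq_0_iff. Qed.

Lemma Hmat_zero_iff t : mx2_zero (Hmat t) <-> lam_lo t = 0 /\ lam_hi t = 0.
Proof. unfold lam_lo, lam_hi. rewrite offdiag_sq_Hmat. apply herm2_zero_iff. Qed.

End Family.

Definition sol_coords (t : R) (a b : C) : C * C := ((a + b)%C, (a * wplus t + b * wminus t)%C).

Lemma Hmat_row1 al al1 al2 t a b :
  (m11 (Hmat al al1 al2 t) * fst (sol_coords t a b)
   + m12 (Hmat al al1 al2 t) * snd (sol_coords t a b))%C =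
  (sol t a b 3 0 + (al2 * sol t a b 0 0 + Cconj al * sol t a b 1 0))%C.
Proof.
  rewrite !sol_at_0. unfold Hmat, herm2, diag_x, diag_y, sol_coords, wplus, wminus. simpl.
  destruct al. apply injective_projections; simpl; ring.
Qed.

Lemma Hmat_row2 al al1 al2 t a b :
  (m21 (Hmat al al1 al2 t) * fst (sol_coords t a b)
   + m22 (Hmat al al1 al2 t) * snd (sol_coords t a b))%C =
  (al * sol t a b 0 0 + al1 * sol t a b 1 0 - sol t a b 2 0)%C.
Proof.
  rewrite !sol_at_0. unfold Hmat, herm2, diag_x, diag_y, sol_coords, wplus, wminus. simpl.
  destruct al. apply injective_projections; simpl; ring.
Qed.

Lemma sol_bc_iff_ker al al1 al2 t a b :
  sol_bc al al1 al2 t a b <-> ker2 (Hmat al al1 al2 t) (sol_coords t a b).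
Proof.
  unfold sol_bc, ker2. rewrite Hmat_row1, Hmat_row2. split.
  - intros [B2 B3]. rewrite B2, B3. split; ring.
  - intros [R1 R2]. split; apply Ceq_minus.
    + transitivity (- (al * sol t a b 0 0 + al1 * sol t a b 1 0 - sol t a b 2 0))%C;
        [ring|rewrite R2; ring].
    + transitivity (sol t a b 3 0 + (al2 * sol t a b 0 0 + Cconj al * sol t a b 1 0))%C;
        [ring|exact R1].
Qed.

Lemma wminus_sub_wplus_neq_0 t : 0 < t -> (wminus t - wplus t)%C <> RtoC 0.
Proof. intros; apply C_neq_0; simpl; right; lra. Qed.

(* The solutions with [(u 0, u' 0) = (1, 0)] and [(0, 1)]. *)
Definition sol_basis1 (t : R) : R -> C :=
  sol t (wminus t / (wminus t - wplus t))%C (- wplus t / (wminus t - wplus t))%C 0.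
Definition sol_basis2 (t : R) : R -> C :=
  sol t (- (1) / (wminus t - wplus t))%C (1 / (wminus t - wplus t))%C 0.

Lemma sol_has_coords t a b : 0 < t ->
  has_coords R halfline (sol_basis1 t) (sol_basis2 t) (sol t a b 0) (sol_coords t a b).
Proof.
  intros Ht x _. pose proof (wminus_sub_wplus_neq_0 t Ht).
  unfold sol_basis1, sol_basis2, sol_coords, sol. simpl. field. assumption.
Qed.

Lemma sol_basis_indep t : 0 < t -> forall c1 c2,
  (forall x, halfline x -> (c1 * sol_basis1 t x + c2 * sol_basis2 t x)%C = RtoC 0) ->
  c1 = RtoC 0 /\ c2 = RtoC 0.
Proof.
  intros Ht c1 c2 H. pose proof (wminus_sub_wplus_neq_0 t Ht) as Hd.
  assert (Hc1 : c1 = RtoC 0).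
  { rewrite <- (H 0 (Rle_refl 0)). unfold sol_basis1, sol_basis2. rewrite !sol_at_0.
    field. exact Hd. }
  subst c1. split; [reflexivity|].
  set (x0 := PI / (2 * t)).
  assert (Hx0 : 0 < x0) by (apply Rdiv_lt_0_compat; [apply PI_RGT_0|lra]).
  assert (Hdiff : (cexp (wminus t) x0 - cexp (wplus t) x0)%C <> RtoC 0).
  { apply C_neq_0. right. unfold cexp, wplus, wminus. simpl.
    replace (t * x0) with (PI / 2) by (unfold x0; field; lra).
    replace (- t * x0) with (- (PI / 2)) by (unfold x0; field; lra).
    rewrite sin_neg, sin_PI2. pose proof (exp_pos (- (PI / 2))). lra. }
  apply (Cmult_reg_0_l (sol_basis2 t x0)).
  - intros Hz. apply Hdiff. transitivity (sol_basis2 t x0 * (wminus t - wplus t))%C;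
      [unfold sol_basis2, sol; field; exact Hd|rewrite Hz; ring].
  - rewrite Cmult_comm, <- (H x0) by (left; exact Hx0). ring.
Qed.

Lemma H_eig_has_coords al al1 al2 t u : 0 < t -> H_eig al al1 al2 (- (4 * t ^ 4)) u ->
  exists v, ker2 (Hmat al al1 al2 t) v /\ has_coords R halfline (sol_basis1 t) (sol_basis2 t) u v.
Proof.
  intros Ht Hu. destruct (H_eig_sol al al1 al2 t u Ht Hu) as (a & b & Hsol & Hbc).
  exists (sol_coords t a b). split; [apply sol_bc_iff_ker, Hbc|].
  intros x Hx. rewrite Hsol by exact Hx. exact (sol_has_coords t a b Ht x Hx).
Qed.

Lemma ker_Hmat_H_eig al al1 al2 t v : 0 < t -> ker2 (Hmat al al1 al2 t) v ->
  exists u, H_eig al al1 al2 (- (4 * t ^ 4)) u /\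
    has_coords R halfline (sol_basis1 t) (sol_basis2 t) u v.
Proof.
  intros Ht Hv. pose proof (wminus_sub_wplus_neq_0 t Ht) as Hd.
  set (a := ((fst v * wminus t - snd v) / (wminus t - wplus t))%C).
  set (b := ((snd v - fst v * wplus t) / (wminus t - wplus t))%C).
  assert (Hab : sol_coords t a b = v).
  { destruct v as [v0 v1]. unfold sol_coords, a, b. simpl. f_equal; field; exact Hd. }
  exists (sol t a b 0). rewrite <- Hab in Hv |- *. split.
  - apply sol_H_eig; [exact Ht|]. apply sol_bc_iff_ker, Hv.
  - apply sol_has_coords, Ht.
Qed.

(** * Counting negative eigenvalues *)

Definition quartic_scale (lam : R) : R := sqrt (sqrt (- lam / 4)).

Lemma quartic_scale_pos lam : lam < 0 -> 0 < quartic_scale lam.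
Proof. intros H. unfold quartic_scale. apply sqrt_lt_R0, sqrt_lt_R0. lra. Qed.

Lemma quartic_scale_spec lam : lam < 0 -> lam = - (4 * quartic_scale lam ^ 4).
Proof.
  intros H. unfold quartic_scale.
  replace (sqrt (sqrt (- lam / 4)) ^ 4) with ((sqrt (sqrt (- lam / 4)) ^ 2) ^ 2) by ring.
  rewrite pow2_sqrt by apply sqrt_pos. rewrite pow2_sqrt by lra. field.
Qed.

Lemma quartic_scale_inv s : 0 < s -> quartic_scale (- (4 * s ^ 4)) = s.
Proof.
  intros Hs. unfold quartic_scale.
  replace (- - (4 * s ^ 4) / 4) with ((s ^ 2) ^ 2) by field.
  rewrite sqrt_pow2 by apply pow2_ge_0. apply sqrt_pow2. lra.
Qed.

Definition sign_count (c : R) : nat := if Rlt_dec c 0 then 1%nat else 0%nat.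

Definition neg_root_count (P : R -> Prop) (k : nat) : Prop :=
  (k = 0%nat /\ forall lam, lam < 0 -> ~ P lam) \/
  (k = 1%nat /\ exists r, r < 0 /\ forall lam, lam < 0 -> (P lam <-> lam = r)).

Lemma neg_root_count_eq c : neg_root_count (fun lam => lam = c) (sign_count c).
Proof.
  unfold sign_count. destruct (Rlt_dec c 0) as [Hc|Hc].
  - right. split; [reflexivity|]. exists c. split; [exact Hc|]. tauto.
  - left. split; [reflexivity|]. intros lam Hl ->. lra.
Qed.

Lemma neg_root_count_increasing (g : R -> R) :
  (forall s t, 0 <= s < t -> g s < g t) -> continuity g -> (exists T, 0 < T /\ 0 < g T) ->
  neg_root_count (fun lam => g (quartic_scale lam) = 0) (sign_count (g 0)).
Proof.
  intros Hinc Hcont (T & HT & HgT). unfold sign_count. destruct (Rlt_dec (g 0) 0) as [Hg0|Hg0].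
  - right. split; [reflexivity|].
    destruct (IVT g 0 T Hcont HT Hg0 HgT) as (t0 & [Ht0 _] & Hz).
    assert (Ht0' : 0 < t0) by (destruct Ht0 as [|<-]; [assumption|lra]).
    exists (- (4 * t0 ^ 4)). split; [pose proof (pow_lt t0 4 Ht0'); lra|].
    intros lam Hl. pose proof (quartic_scale_pos lam Hl) as Hs. split.
    + intros Hgs. rewrite (quartic_scale_spec lam Hl). do 3 f_equal.
      destruct (Rtotal_order (quartic_scale lam) t0) as [Hlt|[Heq|Hgt]]; [|exact Heq|];
        [pose proof (Hinc _ _ (conj (Rlt_le _ _ Hs) Hlt))
        |pose proof (Hinc _ _ (conj (Rlt_le _ _ Ht0') Hgt))]; lra.
    + intros ->. rewrite quartic_scale_inv; assumption.
  - left. split; [reflexivity|]. intros lam Hl Hz.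
    pose proof (Hinc 0 (quartic_scale lam) (conj (Rle_refl 0) (quartic_scale_pos lam Hl))). lra.
Qed.

Section TwoBranches.
Variables (X : Type) (D : X -> Prop) (Eig : R -> (X -> C) -> Prop) (P1 P2 : R -> Prop).

Hypothesis eigenvector_iff : forall lam, lam < 0 ->
  ((exists v, Eig lam v /\ exists x, D x /\ v x <> RtoC 0) <-> P1 lam \/ P2 lam).
Hypothesis dim_simple : forall lam, lam < 0 -> P1 lam \/ P2 lam -> ~ (P1 lam /\ P2 lam) ->
  subspace_dim D (Eig lam) 1.
Hypothesis dim_double : forall lam, lam < 0 -> P1 lam -> P2 lam -> subspace_dim D (Eig lam) 2.

Lemma neg_eig_count_intro (l : list R) (ms : list nat) :
  NoDup l -> length ms = length l ->
  (forall lam, (lam < 0 /\ (P1 lam \/ P2 lam)) <-> In lam l) ->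
  (forall i, (i < length l)%nat -> subspace_dim D (Eig (nth i l 0)) (nth i ms 0%nat)) ->
  neg_eig_count D Eig (fold_right Nat.add 0%nat ms).
Proof.
  intros Hnd Hlen Hin Hdim.
  exists l, ms. split; [exact Hnd|split; [exact Hlen|split; [|split; [exact Hdim|reflexivity]]]].
  intros lam. rewrite <- Hin.
  split; intros [Hl H]; (split; [exact Hl|]); apply eigenvector_iff; assumption.
Qed.

Lemma neg_eig_count_branches k1 k2 :
  neg_root_count P1 k1 -> neg_root_count P2 k2 -> neg_eig_count D Eig (k1 + k2).
Proof.
  intros [[-> N1]|[-> (r1 & Hr1 & E1)]] [[-> N2]|[-> (r2 & Hr2 & E2)]].
  - apply (neg_eig_count_intro nil nil); [constructor|reflexivity| |intros; simpl in *; lia].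
    intros lam. simpl. split; [|tauto]. intros [Hl [H|H]]; [apply (N1 lam)|apply (N2 lam)]; assumption.
  - apply (neg_eig_count_intro (r2 :: nil) (1%nat :: nil));
      [repeat constructor; simpl; tauto|reflexivity| |].
    + intros lam. simpl. split.
      * intros [Hl [H|H]]; [destruct (N1 lam Hl H)|left; symmetry; apply E2; assumption].
      * intros [<-|[]]. split; [exact Hr2|right; apply E2; auto].
    + intros [|i] Hi; simpl in Hi; [|lia]. apply dim_simple; [exact Hr2|right; apply E2; auto|].
      intros [H _]. exact (N1 r2 Hr2 H).
  - apply (neg_eig_count_intro (r1 :: nil) (1%nat :: nil));
      [repeat constructor; simpl; tauto|reflexivity| |].
    + intros lam. simpl. split.
      * intros [Hl [H|H]]; [left; symmetry; apply E1; assumption|destruct (N2 lam Hl H)].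
      * intros [<-|[]]. split; [exact Hr1|left; apply E1; auto].
    + intros [|i] Hi; simpl in Hi; [|lia]. apply dim_simple; [exact Hr1|left; apply E1; auto|].
      intros [_ H]. exact (N2 r1 Hr1 H).
  - destruct (Req_dec r1 r2) as [<-|Hne].
    + apply (neg_eig_count_intro (r1 :: nil) (2%nat :: nil));
        [repeat constructor; simpl; tauto|reflexivity| |].
      * intros lam. simpl. split.
        -- intros [Hl [H|H]]; left; symmetry; [apply E1|apply E2]; assumption.
        -- intros [<-|[]]. split; [exact Hr1|left; apply E1; auto].
      * intros [|i] Hi; simpl in Hi; [|lia].
        apply dim_double; [exact Hr1|apply E1; auto|apply E2; auto].
    + apply (neg_eig_count_intro (r1 :: r2 :: nil) (1%nat :: 1%nat :: nil));
        [repeat constructor; simpl; intuition|reflexivity| |].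
      * intros lam. simpl. split.
        -- intros [Hl [H|H]]; [left|right; left]; symmetry; [apply E1|apply E2]; assumption.
        -- intros [<-|[<-|[]]]; (split; [assumption|]); [left; apply E1|right; apply E2]; auto.
      * assert (N12 : forall r, r < 0 -> ~ (P1 r /\ P2 r))
          by (intros r Hr [H1 H2]; apply Hne; rewrite <- (proj1 (E1 r Hr) H1); apply E2; auto).
        intros [|[|i]] Hi; simpl in Hi; [| |lia]; simpl; apply dim_simple; auto.
        -- left; apply E1; auto.
        -- right; apply E2; auto.
Qed.

End TwoBranches.

Lemma subspace_dim_unique {X : Type} (D : X -> Prop) Eg m m' :
  subspace_dim D Eg m -> subspace_dim D Eg m' -> m = m'.
Proof.
  intros [(us & Hl & HE & Hi) Hub] [(us' & Hl' & HE' & Hi') Hub'].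
  specialize (Hub us' HE' Hi'). specialize (Hub' us HE Hi). lia.
Qed.

Lemma neg_eig_count_unique {X : Type} (D : X -> Prop) (Eig : R -> (X -> C) -> Prop) n n' :
  neg_eig_count D Eig n -> neg_eig_count D Eig n' -> n = n'.
Proof.
  intros (l & ms & Hnd & Hlen & Hmem & Hdim & <-) (l' & ms' & Hnd' & Hlen' & Hmem' & Hdim' & <-).
  set (dim := fun lam => epsilon (inhabits 0%nat) (fun m => subspace_dim D (Eig lam) m)).
  assert (Hms : forall l0 ms0, length ms0 = length l0 ->
    (forall i, (i < length l0)%nat -> subspace_dim D (Eig (nth i l0 0)) (nth i ms0 0%nat)) ->
    ms0 = map dim l0).
  { intros l0 ms0 HL HD. apply nth_ext with (d := 0%nat) (d' := dim 0); [now rewrite length_map|].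
    intros i Hi. rewrite HL in Hi. rewrite map_nth.
    apply (subspace_dim_unique D (Eig (nth i l0 0))); [exact (HD i Hi)|].
    apply (epsilon_spec (inhabits 0%nat) (fun m => subspace_dim D (Eig (nth i l0 0)) m)).
    exists (nth i ms0 0%nat). exact (HD i Hi). }
  rewrite (Hms l ms Hlen Hdim), (Hms l' ms' Hlen' Hdim').
  assert (Hperm : Permutation l l').
  { apply NoDup_Permutation; [exact Hnd|exact Hnd'|]. intros x. rewrite <- Hmem, <- Hmem'. tauto. }
  change (list_sum (map dim l) = list_sum (map dim l')).
  apply Permutation_list_sum, Permutation_map, Hperm.
Qed.

Section Operator.
Variables (al : C) (al1 al2 : R).

Lemma H_eigenvector_iff t : 0 < t ->
  (exists v, H_eig al al1 al2 (- (4 * t ^ 4)) v /\ exists x, halfline x /\ v x <> RtoC 0) <->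
  lam_lo al al1 al2 t = 0 \/ lam_hi al al1 al2 t = 0.
Proof.
  intros Ht.
  rewrite (eigenvector_exists_iff R halfline _ (sol_basis1 t) (sol_basis2 t) (Hmat al al1 al2 t)
    (sol_basis_indep t Ht) (fun u => H_eig_has_coords al al1 al2 t u Ht)
    (fun v => ker_Hmat_H_eig al al1 al2 t v Ht)).
  apply Hmat_det_eq_0_iff.
Qed.

Lemma H_eigenspace_dim_1 t : 0 < t ->
  lam_lo al al1 al2 t = 0 \/ lam_hi al al1 al2 t = 0 ->
  ~ (lam_lo al al1 al2 t = 0 /\ lam_hi al al1 al2 t = 0) ->
  subspace_dim halfline (H_eig al al1 al2 (- (4 * t ^ 4))) 1.
Proof.
  intros Ht Hor Hand.
  apply (eigenspace_dim_1 R halfline _ (sol_basis1 t) (sol_basis2 t) (Hmat al al1 al2 t)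
    (sol_basis_indep t Ht) (fun u => H_eig_has_coords al al1 al2 t u Ht)
    (fun v => ker_Hmat_H_eig al al1 al2 t v Ht)).
  - apply Hmat_det_eq_0_iff, Hor.
  - rewrite Hmat_zero_iff. exact Hand.
Qed.

Lemma H_eigenspace_dim_2 t : 0 < t ->
  lam_lo al al1 al2 t = 0 -> lam_hi al al1 al2 t = 0 ->
  subspace_dim halfline (H_eig al al1 al2 (- (4 * t ^ 4))) 2.
Proof.
  intros Ht Hlo Hhi.
  apply (eigenspace_dim_2 R halfline _ (sol_basis1 t) (sol_basis2 t) (Hmat al al1 al2 t)
    (sol_basis_indep t Ht) (fun u => H_eig_has_coords al al1 al2 t u Ht)
    (fun v => ker_Hmat_H_eig al al1 al2 t v Ht)).
  apply Hmat_zero_iff. split; assumption.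
Qed.

Lemma H_neg_eig_count :
  neg_eig_count halfline (H_eig al al1 al2)
    (sign_count (lam_lo al al1 al2 0) + sign_count (lam_hi al al1 al2 0)).
Proof.
  apply (neg_eig_count_branches R halfline (H_eig al al1 al2)
    (fun lam => lam_lo al al1 al2 (quartic_scale lam) = 0)
    (fun lam => lam_hi al al1 al2 (quartic_scale lam) = 0));
    try (intros lam Hl; pose proof (quartic_scale_pos lam Hl);
      pose proof (quartic_scale_spec lam Hl) as E;
      set (t := quartic_scale lam) in *; rewrite E).
  - apply H_eigenvector_iff; assumption.
  - apply H_eigenspace_dim_1; assumption.
  - apply H_eigenspace_dim_2; assumption.
  - apply neg_root_count_increasing;
      [apply lam_lo_increasing|apply lam_lo_continuous|apply lam_lo_eventually_pos].
  - apply neg_root_count_increasing;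
      [apply lam_hi_increasing|apply lam_hi_continuous|apply lam_hi_eventually_pos].
Qed.

Definition Amat (lam : R) : mx2 := herm2 (al2 - lam) (al1 - lam) al.

Definition unit_true (b : bool) : C := if b then RtoC 1 else RtoC 0.
Definition unit_false (b : bool) : C := if b then RtoC 0 else RtoC 1.

Lemma unit_indep c1 c2 :
  (forall b, allbool b -> (c1 * unit_true b + c2 * unit_false b)%C = RtoC 0) ->
  c1 = RtoC 0 /\ c2 = RtoC 0.
Proof.
  intros H. pose proof (H true I) as H1. pose proof (H false I) as H2. simpl in H1, H2.
  split; [rewrite <- H1|rewrite <- H2]; ring.
Qed.

Lemma A_eig_has_coords lam u : A_eig al al1 al2 lam u ->
  exists v, ker2 (Amat lam) v /\ has_coords bool allbool unit_true unit_false u v.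
Proof.
  intros [E1 E2]. exists (u true, u false). split.
  - unfold ker2, Amat, herm2; cbn [m11 m12 m21 m22 fst snd]. split.
    + transitivity (al2 * u true + Cconj al * u false - lam * u true)%C;
        [destruct al; apply injective_projections; simpl; ring|rewrite E1; ring].
    + transitivity (al * u true + al1 * u false - lam * u false)%C;
        [apply injective_projections; simpl; ring|rewrite E2; ring].
  - intros [|] _; simpl; ring.
Qed.

Lemma ker_Amat_A_eig lam v : ker2 (Amat lam) v ->
  exists u, A_eig al al1 al2 lam u /\ has_coords bool allbool unit_true unit_false u v.
Proof.
  destruct v as [v0 v1]. unfold ker2, Amat, herm2; cbn [m11 m12 m21 m22 fst snd]. intros [R1 R2].
  exists (fun b : bool => if b then v0 else v1). split.
  - split.
    + transitivity (RtoC (al2 - lam) * v0 + Cconj al * v1 + lam * v0)%C;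
        [destruct al; apply injective_projections; simpl|rewrite R1]; ring.
    + transitivity (al * v0 + RtoC (al1 - lam) * v1 + lam * v1)%C;
        [apply injective_projections; simpl|rewrite R2]; ring.
  - intros [|] _; simpl; ring.
Qed.

Lemma eig_shift x y n c :
  eig_lo (x - c) (y - c) n = eig_lo x y n - c /\ eig_hi (x - c) (y - c) n = eig_hi x y n - c.
Proof. unfold eig_lo, eig_hi. replace (x - c - (y - c)) with (x - y) by ring. split; field. Qed.

Lemma lam_lo_hi_0 :
  lam_lo al al1 al2 0 = eig_lo al2 al1 (fst al ^ 2 + snd al ^ 2) /\
  lam_hi al al1 al2 0 = eig_hi al2 al1 (fst al ^ 2 + snd al ^ 2).
Proof. unfold lam_lo, lam_hi, diag_x, diag_y, offdiag_sq. split; f_equal; ring. Qed.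

Lemma Amat_det_eq_0_iff lam :
  det2 (Amat lam) = RtoC 0 <-> lam = lam_lo al al1 al2 0 \/ lam = lam_hi al al1 al2 0.
Proof.
  unfold Amat. rewrite herm2_det_eq_0_iff.
  destruct (eig_shift al2 al1 (fst al ^ 2 + snd al ^ 2) lam) as [-> ->].
  destruct lam_lo_hi_0 as [-> ->]. lra.
Qed.

Lemma Amat_zero_iff lam :
  mx2_zero (Amat lam) <-> lam = lam_lo al al1 al2 0 /\ lam = lam_hi al al1 al2 0.
Proof.
  unfold Amat. rewrite herm2_zero_iff.
  destruct (eig_shift al2 al1 (fst al ^ 2 + snd al ^ 2) lam) as [-> ->].
  destruct lam_lo_hi_0 as [-> ->]. lra.
Qed.

Lemma A_neg_eig_count :
  neg_eig_count allbool (A_eig al al1 al2)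
    (sign_count (lam_lo al al1 al2 0) + sign_count (lam_hi al al1 al2 0)).
Proof.
  pose proof (fun lam => eigenvector_exists_iff bool allbool _ unit_true unit_false (Amat lam)
    unit_indep (A_eig_has_coords lam) (ker_Amat_A_eig lam)) as Hex.
  apply (neg_eig_count_branches bool allbool (A_eig al al1 al2)
    (fun lam => lam = lam_lo al al1 al2 0) (fun lam => lam = lam_hi al al1 al2 0)).
  - intros lam _. rewrite Hex. apply Amat_det_eq_0_iff.
  - intros lam _ Hor Hand. apply (eigenspace_dim_1 bool allbool _ unit_true unit_false (Amat lam)
      unit_indep (A_eig_has_coords lam) (ker_Amat_A_eig lam)).
    + apply Amat_det_eq_0_iff, Hor.
    + rewrite Amat_zero_iff. exact Hand.
  - intros lam _ Hlo Hhi. apply (eigenspace_dim_2 bool allbool _ unit_true unit_false (Amat lam)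
      unit_indep (A_eig_has_coords lam) (ker_Amat_A_eig lam)).
    apply Amat_zero_iff. split; assumption.
  - apply neg_root_count_eq.
  - apply neg_root_count_eq.
Qed.

End Operator.

Theorem proposition5p4 (al : C) (al1 al2 : R) :
  forall n : nat,
    neg_eig_count halfline (H_eig al al1 al2) n <->
    neg_eig_count allbool (A_eig al al1 al2) n.
Proof.
  intros n. split; intros Hn.
  - rewrite (neg_eig_count_unique _ _ _ _ Hn (H_neg_eig_count al al1 al2)).
    apply A_neg_eig_count.
  - rewrite (neg_eig_count_unique _ _ _ _ Hn (A_neg_eig_count al al1 al2)).
    apply H_neg_eig_count.
Qed.
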